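(* In the process algebra $\mathcal{G}$ described in the context, if the instance INST has a solution then $X\simeq Y$.
   Context: Process algebras: a triple $(\mathcal{C},\mathcal{A},\Delta)$ of finitely many constants, actions (including silent $\tau$) and rules $X\stackrel{\ell}{\longrightarrow}P$. Processes: $P::=\epsilon\mid X\mid PP'\mid P\|P'$, sequential composition associative, parallel composition associative and commutative, $\epsilon$ a unit for both. Semantics: rules of $\Delta$; if $P\stackrel{\ell}{\longrightarrow}P'$ then $PQ\stackrel{\ell}{\longrightarrow}P'Q$, $P\|Q\stackrel{\ell}{\longrightarrow}P'\|Q$, $Q\|P\stackrel{\ell}{\longrightarrow}Q\|P'$. $\Longrightarrow$ is the reflexive transitive closure of $\stackrel{\tau}{\longrightarrow}$. Branching bisimilarity $\simeq$ is the largest relation $\mathcal{B}$ such that whenever $P\mathcal{B}Q$ and $P\stackrel{\ell}{\longrightarrow}P'$, either $Q\Longrightarrow Q''\stackrel{\ell}{\longrightarrow}Q'$ with $P\mathcal{B}Q''$ and $P'\mathcal{B}Q'$, or $\ell=\tau$ and $P'\mathcal{B}Q$; and symmetrically. The algebra $\mathcal{G}$: fix a finite alphabet $\Sigma$ with $|\Sigma|\ge2$ and a Post Correspondence instance $\mathrm{INST}=\{(u_1,v_1),\dots,(u_n,v_n)\}$ with $u_k,v_k\in\Sigma^{+}$; INST has a solution if there exist $m\ge1$ and $i_1,\dots,i_m\in\{1,\dots,n\}$ with $u_{i_1}\cdots u_{i_m}=v_{i_1}\cdots v_{i_m}$. Let $\mathcal{N}=\{1,\dots,n\}$. Actions: $\{\lambda_U,\lambda_V,\lambda_D,\lambda_I,\lambda_S,\lambda_Z\}\cup\mathcal{N}\cup\Sigma\cup\{\tau\}$.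 Constants: $X,Y,Z,I,S,C,C',D,G,G',G_u,G_v,G_v'$, $U_k,V_k$ ($k\in\mathcal{N}$), and $W(\omega,k),W(\omega,0)$ for $k\in\mathcal{N}$ and $\omega$ a (possibly empty) suffix of $u_k$ or of $v_k$; $\mathcal{W}$ is the set of these $W$-constants. Rules (with $k$ ranging over $\mathcal{N}$, $a$ over $\Sigma$, $W$ over $\mathcal{W}$): $X\stackrel{\lambda_U}{\longrightarrow}D\|G_v$, $X\stackrel{\tau}{\longrightarrow}D$, $Y\stackrel{\tau}{\longrightarrow}D$, $D\stackrel{\tau}{\longrightarrow}D\|G_u$, $D\stackrel{\lambda_D}{\longrightarrow}C$; $G_u\stackrel{\tau}{\longrightarrow}G_uU_k$, $G_u\stackrel{\lambda_U}{\longrightarrow}G_vU_k$, $G_u\stackrel{\tau}{\longrightarrow}G_v'$, $G_v'\stackrel{\tau}{\longrightarrow}G_v'V_k$, $G_v'\stackrel{\tau}{\longrightarrow}Z$; $G_v\stackrel{\tau}{\longrightarrow}G_vV_k$, $G_v\stackrel{\tau}{\longrightarrow}\epsilon$, $G_v\stackrel{\lambda_V}{\longrightarrow}Z$, $Z\stackrel{\tau}{\longrightarrow}\epsilon$, $Z\stackrel{\lambda_Z}{\longrightarrow}\epsilon$; $C\stackrel{\lambda_I}{\longrightarrow}I$, $C\stackrel{\lambda_S}{\longrightarrow}S$, $C\stackrel{\tau}{\longrightarrow}C\|G$, $C\stackrel{\tau}{\longrightarrow}C\|G_v$; $G\stackrel{\tau}{\longrightarrow}GU_k$, $G\stackrel{\tau}{\longrightarrow}GV_k$,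 $G\stackrel{\tau}{\longrightarrow}\epsilon$; $I\stackrel{\lambda_I}{\longrightarrow}C'$, $I\stackrel{k}{\longrightarrow}I$, $S\stackrel{\lambda_S}{\longrightarrow}C'$, $S\stackrel{a}{\longrightarrow}S$, $C'\stackrel{\tau}{\longrightarrow}C'\|G'$, $C'\stackrel{\tau}{\longrightarrow}\epsilon$; $G'\stackrel{\tau}{\longrightarrow}G'U_k$, $G'\stackrel{\tau}{\longrightarrow}G'V_k$, $G'\stackrel{\tau}{\longrightarrow}G'W$, $G'\stackrel{\tau}{\longrightarrow}G_v$, $G'\stackrel{\tau}{\longrightarrow}Z$; $U_k\stackrel{\tau}{\longrightarrow}W(u_k,k)$, $V_k\stackrel{\tau}{\longrightarrow}W(v_k,k)$; $W(a\omega,k)\stackrel{a}{\longrightarrow}W(\omega,k)$, $W(a\omega,0)\stackrel{a}{\longrightarrow}W(\omega,0)$, $W(\omega,k)\stackrel{k}{\longrightarrow}W(\omega,0)$, $W(a\omega,k)\stackrel{\tau}{\longrightarrow}W(\omega,k)$, $W(a\omega,0)\stackrel{\tau}{\longrightarrow}W(\omega,0)$, $W(\omega,k)\stackrel{\tau}{\longrightarrow}W(\omega,0)$, $W(\epsilon,0)\stackrel{\tau}{\longrightarrow}\epsilon$. *)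

From mathcomp Require Import all_boot.
From Stdlib Require Import Relations.Relation_Operators.

Set Implicit Arguments.
Unset Strict Implicit.
Unset Printing Implicit Defensive.

Inductive proc (C : Type) : Type :=
| Eps : proc C
| Cst : C -> proc C
| Seq : proc C -> proc C -> proc C
| Par : proc C -> proc C -> proc C.
Arguments Eps {C}.

(* Structural congruence: sequential composition associative, parallel
   composition associative and commutative, eps a unit for both. Processes
   are identified up to this congruence. *)
Inductive pcong (C : Type) : proc C -> proc C -> Prop :=
| pc_refl p : pcong p p
| pc_sym p q : pcong p q -> pcong q p
| pc_trans p q r : pcong p q -> pcong q r -> pcong p r
| pc_seq p p' q q' : pcong p p' -> pcong q q' -> pcong (Seq p q) (Seq p' q')
| pc_par p p' q q' : pcong p p' -> pcong q q' -> pcong (Par p q) (Par p' q')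
| pc_seqA p q r : pcong (Seq (Seq p q) r) (Seq p (Seq q r))
| pc_parA p q r : pcong (Par (Par p q) r) (Par p (Par q r))
| pc_parC p q : pcong (Par p q) (Par q p)
| pc_seq_epsl p : pcong (Seq Eps p) p
| pc_seq_epsr p : pcong (Seq p Eps) p
| pc_par_epsl p : pcong (Par Eps p) p.

Inductive sstep (C A : Type) (Delta : C -> A -> proc C -> Prop)
  : proc C -> A -> proc C -> Prop :=
| ss_rule c l p : Delta c l p -> sstep Delta (Cst c) l p
| ss_seq p l p' q : sstep Delta p l p' -> sstep Delta (Seq p q) l (Seq p' q)
| ss_parl p l p' q : sstep Delta p l p' -> sstep Delta (Par p q) l (Par p' q)
| ss_parr p l p' q : sstep Delta p l p' -> sstep Delta (Par q p) l (Par q p').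

Definition step (C A : Type) (Delta : C -> A -> proc C -> Prop)
  (P : proc C) (l : A) (P' : proc C) : Prop :=
  exists Q Q', pcong P Q /\ sstep Delta Q l Q' /\ pcong Q' P'.

Definition tau_steps (C A : Type) (Delta : C -> A -> proc C -> Prop) (tau : A)
  : proc C -> proc C -> Prop :=
  clos_refl_trans (proc C) (fun P P' => step Delta P tau P').

Definition branching_bisimulation (C A : Type) (Delta : C -> A -> proc C -> Prop)
  (tau : A) (B : proc C -> proc C -> Prop) : Prop :=
  (forall P Q l P', B P Q -> step Delta P l P' ->
     (exists Q'' Q', tau_steps Delta tau Q Q'' /\ step Delta Q'' l Q'
                     /\ B P Q'' /\ B P' Q')
     \/ (l = tau /\ B P' Q))
  /\
  (forall P Q l Q', B P Q -> step Delta Q l Q' ->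
     (exists P'' P', tau_steps Delta tau P P'' /\ step Delta P'' l P'
                     /\ B P'' Q /\ B P' Q')
     \/ (l = tau /\ B P Q')).

Definition branching_bisimilar (C A : Type) (Delta : C -> A -> proc C -> Prop)
  (tau : A) (P Q : proc C) : Prop :=
  exists B, branching_bisimulation Delta tau B /\ B P Q.

(* Indices k range over 'I_n (0-based instead of 1..n); the second argument  *)
(* of W is an option 'I_n, with None playing the role of 0.                  *)

Inductive gact (Sigma : Type) (n : nat) : Type :=
| lamU | lamV | lamD | lamI | lamS | lamZ
| actN of 'I_n
| actS of Sigma
| gtau.

Inductive gconst (Sigma : Type) (n : nat) : Type :=
| cX | cY | cZ | cI | cS | cC | cC' | cD | cG | cG' | cGu | cGv | cGv'
| cU of 'I_n
| cV of 'I_n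
| cW of seq Sigma & option 'I_n.

Arguments lamU {Sigma n}. Arguments lamV {Sigma n}. Arguments lamD {Sigma n}.
Arguments lamI {Sigma n}. Arguments lamS {Sigma n}. Arguments lamZ {Sigma n}.
Arguments actN {Sigma n}. Arguments actS {Sigma n}. Arguments gtau {Sigma n}.
Arguments cX {Sigma n}. Arguments cY {Sigma n}. Arguments cZ {Sigma n}.
Arguments cI {Sigma n}. Arguments cS {Sigma n}. Arguments cC {Sigma n}.
Arguments cC' {Sigma n}. Arguments cD {Sigma n}. Arguments cG {Sigma n}.
Arguments cG' {Sigma n}. Arguments cGu {Sigma n}. Arguments cGv {Sigma n}.
Arguments cGv' {Sigma n}. Arguments cU {Sigma n}. Arguments cV {Sigma n}.
Arguments cW {Sigma n}.

Section GAlgebra.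
Variables (Sigma : finType) (n : nat) (u v : 'I_n -> seq Sigma).

Local Notation P := (proc (gconst Sigma n)).
Local Notation K c := (Cst c).

Definition validW (w : seq Sigma) (k : option 'I_n) : Prop :=
  match k with
  | Some k => suffix w (u k) || suffix w (v k)
  | None => exists k, suffix w (u k) || suffix w (v k)
  end.

Inductive G_rules : gconst Sigma n -> gact Sigma n -> P -> Prop :=
| r_X_U : G_rules cX lamU (Par (K cD) (K cGv))
| r_X_t : G_rules cX gtau (K cD)
| r_Y_t : G_rules cY gtau (K cD)
| r_D_t : G_rules cD gtau (Par (K cD) (K cGu))
| r_D_D : G_rules cD lamD (K cC)
| r_Gu_t k : G_rules cGu gtau (Seq (K cGu) (K (cU k)))
| r_Gu_U k : G_rules cGu lamU (Seq (K cGv) (K (cU k)))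
| r_Gu_t' : G_rules cGu gtau (K cGv')
| r_Gv'_t k : G_rules cGv' gtau (Seq (K cGv') (K (cV k)))
| r_Gv'_Z : G_rules cGv' gtau (K cZ)
| r_Gv_t k : G_rules cGv gtau (Seq (K cGv) (K (cV k)))
| r_Gv_e : G_rules cGv gtau Eps
| r_Gv_V : G_rules cGv lamV (K cZ)
| r_Z_t : G_rules cZ gtau Eps
| r_Z_Z : G_rules cZ lamZ Eps
| r_C_I : G_rules cC lamI (K cI)
| r_C_S : G_rules cC lamS (K cS)
| r_C_G : G_rules cC gtau (Par (K cC) (K cG))
| r_C_Gv : G_rules cC gtau (Par (K cC) (K cGv))
| r_G_U k : G_rules cG gtau (Seq (K cG) (K (cU k)))
| r_G_V k : G_rules cG gtau (Seq (K cG) (K (cV k)))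
| r_G_e : G_rules cG gtau Eps
| r_I_I : G_rules cI lamI (K cC')
| r_I_k k : G_rules cI (actN k) (K cI)
| r_S_S : G_rules cS lamS (K cC')
| r_S_a a : G_rules cS (actS a) (K cS)
| r_C'_t : G_rules cC' gtau (Par (K cC') (K cG'))
| r_C'_e : G_rules cC' gtau Eps
| r_G'_U k : G_rules cG' gtau (Seq (K cG') (K (cU k)))
| r_G'_V k : G_rules cG' gtau (Seq (K cG') (K (cV k)))
| r_G'_W w k : validW w k -> G_rules cG' gtau (Seq (K cG') (K (cW w k)))
| r_G'_Gv : G_rules cG' gtau (K cGv)
| r_G'_Z : G_rules cG' gtau (K cZ)
| r_U k : G_rules (cU k) gtau (K (cW (u k) (Some k)))
| r_V k : G_rules (cV k) gtau (K (cW (v k) (Some k)))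
| r_W_a a w k : validW (a :: w) k ->
    G_rules (cW (a :: w) k) (actS a) (K (cW w k))
| r_W_k w k : validW w (Some k) ->
    G_rules (cW w (Some k)) (actN k) (K (cW w None))
| r_W_at a w k : validW (a :: w) k ->
    G_rules (cW (a :: w) k) gtau (K (cW w k))
| r_W_kt w k : validW w (Some k) ->
    G_rules (cW w (Some k)) gtau (K (cW w None))
| r_W_e : validW [::] None -> G_rules (cW [::] None) gtau Eps.

Definition PCP_solvable : Prop :=
  exists s : seq 'I_n, 0 < size s /\ flatten (map u s) = flatten (map v s).

End GAlgebra.

(* X and Y differ only in that X can perform lambda_U to D || G_v.  Y answers
   with tau to D, silently spawns G_u U_{i_m} ... U_{i_2} and performs lambda_U,
   reaching D || G_v U_{i_1} ... U_{i_m} for a solution i_1 ... i_m of INST; this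
   G_v-thread is balanced: its U-part spells the same word over u and over v.
   From then on both sides are a control constant (D, C, I, S or C') in parallel
   with a multiset of threads, and the bisimulation relates such configurations
   phase by phase, ignoring threads that the control constant can spawn silently
   and that can vanish silently.  In phase D the two multisets differ only in
   their balanced G_v-threads, equally many on each side.  After lambda_D a
   balanced G_v-thread behaves like a G_v-thread that C spawns itself, because its
   letters are v of its indices; its lambda_V is answered by such a thread, which
   leaves two Z-threads with the same letters and the same indices.  In phase I
   the control constant performs every index action itself, so paired threads
   only need to spell the same letters; phase S is symmetric, with indices. *)

From mathcomp Require Import all_boot.
From Stdlib Require Import Relations Permutation.

Set Implicit Arguments.
Unset Strict Implicit.
Unset Printing Implicit Defensive.

Section ListFacts.
Variable T : Type.

Lemma Forall_mid (Pp : T -> Prop) s1 x s2 :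
  List.Forall Pp (s1 ++ x :: s2) -> Pp x /\ List.Forall Pp (s1 ++ s2).
Proof.
by move/List.Forall_app => [H1 /List.Forall_cons_iff [H2 H3]]; split=> //; exact/List.Forall_app.
Qed.

Lemma in_cat_split (t : T) s1 s2 : List.In t (s1 ++ s2) ->
  (exists a b, s1 = a ++ t :: b) \/ (exists a b, s2 = a ++ t :: b).
Proof. by case/List.in_app_iff => H; [left|right]; exact: List.in_split. Qed.

Lemma in_cat3_split (t : T) s1 s2 s3 : List.In t (s1 ++ s2 ++ s3) ->
  (exists a b, s1 = a ++ t :: b) \/ (exists a b, s2 = a ++ t :: b) \/
  (exists a b, s3 = a ++ t :: b).
Proof.
by case/List.in_app_iff => [H|/List.in_app_iff [H|H]];
  [left|right; left|right; right]; exact: List.in_split.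
Qed.

Lemma Permutation_mid_In s1 (t : T) s2 s : Permutation (s1 ++ t :: s2) s -> List.In t s.
Proof. by move=> H; exact: Permutation_in H (List.in_elt t s1 s2). Qed.

Lemma Permutation_replace s1 s2 s1' s2' (t t' : T) :
  Permutation (s1 ++ t :: s2) (s1' ++ t :: s2') ->
  Permutation (s1 ++ t' :: s2) (s1' ++ t' :: s2').
Proof. by move=> H; apply: Permutation_elt; exact: Permutation_app_inv H. Qed.

Lemma Forall2_mid_inv (R : T -> T -> Prop) s1 x s2 s' :
  List.Forall2 R (s1 ++ x :: s2) s' -> exists s1' y s2', s' = s1' ++ y :: s2' /\
    List.Forall2 R s1 s1' /\ R x y /\ List.Forall2 R s2 s2'.
Proof.
case/List.Forall2_app_inv_l => s1' [s'' [H1 [H2 ->]]].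
by inversion H2 as [|? y ? s2' ? ?]; subst; exists s1', y, s2'.
Qed.

Lemma Forall2_mid (R : T -> T -> Prop) s1 s1' x y s2 s2' :
  List.Forall2 R s1 s1' -> R x y -> List.Forall2 R s2 s2' ->
  List.Forall2 R (s1 ++ x :: s2) (s1' ++ y :: s2').
Proof. by move=> H1 H2 H3; apply: List.Forall2_app => //; constructor. Qed.

Lemma Forall2_and_inv (R R' : T -> T -> Prop) s s' :
  List.Forall2 (fun x y => R x y /\ R' x y) s s' -> List.Forall2 R s s' /\ List.Forall2 R' s s'.
Proof. by elim=> {s s'} [|x y s s' [H1 H2] _ [H3 H4]]; split; constructor. Qed.

(* Stated with [cat] rather than [List.app] so that they apply syntactically
   in [perm_solve]. *)
Lemma Permutation_catC (s1 s2 : seq T) : Permutation (s1 ++ s2) (s2 ++ s1).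
Proof. exact: Permutation_app_comm. Qed.

Lemma Permutation_cat_head (s s1 s2 : seq T) :
  Permutation s1 s2 -> Permutation (s ++ s1) (s ++ s2).
Proof. exact: Permutation_app_head. Qed.

End ListFacts.

Ltac perm_rotate := match goal with
  | |- Permutation ?L (?a ++ ?R) =>
      apply: (@Permutation_trans _ L (R ++ a)); last exact: Permutation_catC
  | |- Permutation ?L (?x :: ?R) =>
      apply: (@Permutation_trans _ L (R ++ [:: x])); last exact: (Permutation_catC R [:: x])
  end.

Ltac perm_solve := do 60 (try (rewrite -?catA /=; first
  [ apply: Permutation_refl | apply: Permutation_cat_head | apply: perm_skip | perm_rotate ])).

Section AllConst.
Variable C : Type.

(* A [Prop]-valued [all], as [validW] is a [Prop]. *)
Fixpoint all_prop (Pc : C -> Prop) (w : seq C) : Prop :=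
  if w is c :: w then Pc c /\ all_prop Pc w else True.

Lemma all_prop_cat Pc w1 w2 : all_prop Pc (w1 ++ w2) <-> all_prop Pc w1 /\ all_prop Pc w2.
Proof. by elim: w1 => /= [|c w1 IH]; tauto. Qed.

Lemma all_prop_map T (f : T -> C) (Pc : C -> Prop) xs :
  (forall x, Pc (f x)) -> all_prop Pc (map f xs).
Proof. by move=> H; elim: xs => //= x xs ->; split. Qed.

End AllConst.

(** * Structural semantics of process algebras *)

Section Semantics.
Variables (C A : Type) (Delta : C -> A -> proc C -> Prop) (tau : A).

Local Notation pc := (@pcong C).
Local Hint Constructors pcong : core.

Fixpoint inert (p : proc C) : Prop :=
  match p with
  | Eps => True
  | Cst _ => False
  | Seq p1 p2 | Par p1 p2 => inert p1 /\ inert p2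
  end.

(* [step] computed by recursion on the source term (see [trans_step] and
   [step_trans]), which makes transitions easy to invert. *)
Fixpoint trans (p : proc C) (l : A) (r : proc C) : Prop :=
  match p with
  | Eps => False
  | Cst c => exists p', Delta c l p' /\ pc p' r
  | Seq p1 p2 => (exists p1', trans p1 l p1' /\ pc (Seq p1' p2) r)
                 \/ (inert p1 /\ trans p2 l r)
  | Par p1 p2 => (exists p1', trans p1 l p1' /\ pc (Par p1' p2) r)
                 \/ (exists p2', trans p2 l p2' /\ pc (Par p1 p2') r)
  end.

Lemma inert_pcong p q : pc p q -> inert p <-> inert q.
Proof. by elim=> //= *; tauto. Qed.

Lemma inert_pcong_Eps p : inert p -> pc p Eps.
Proof.
elim: p => //= [p1 IH1 p2 IH2|p1 IH1 p2 IH2] [/IH1 H1 /IH2 H2].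
- exact: pc_trans (pc_seq H1 H2) (pc_seq_epsl _).
- exact: pc_trans (pc_par H1 H2) (pc_par_epsl _).
Qed.

Lemma trans_pcongr p l r r' : trans p l r -> pc r r' -> trans p l r'.
Proof.
elim: p l r r' => [|c|p1 IH1 p2 IH2|p1 IH1 p2 IH2] l r r' //=.
- by case=> p' [H1 H2] H; exists p'; split; eauto.
- case=> [[p1' [H1 H2]]|[H1 H2]] H; [left; exists p1'; split; eauto|right].
  by split; eauto.
- case=> [[p1' [H1 H2]]|[p2' [H1 H2]]] H; [left; exists p1'|right; exists p2'];
    split; eauto.
Qed.

Section CongruenceCases.
Variables (p q r : proc C).

Lemma trans_seqA l x : trans (Seq (Seq p q) r) l x <-> trans (Seq p (Seq q r)) l x.
Proof.
rewrite /=; split.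
- case=> [[y [[[p1 [H1 H2]]|[H1 H2]] H3]]|[[E1 E2] H]].
  + left; exists p1; split=> //.
    by apply: pc_trans H3; apply: pc_trans (pc_sym (pc_seqA _ _ _)) _; auto.
  + by right; split=> //; left; exists y.
  + by right; split=> //; right.
- case=> [[p1 [H1 H2]]|[E1 [[y [H1 H2]]|[E2 H]]]].
  + left; exists (Seq p1 q); split; first by left; exists p1.
    exact: pc_trans (pc_seqA _ _ _) H2.
  + by left; exists y; split=> //; right.
  + by right.
Qed.

Lemma trans_parA l x : trans (Par (Par p q) r) l x <-> trans (Par p (Par q r)) l x.
Proof.
rewrite /=; split.
- case=> [[y [[[p1 [H1 H2]]|[p1 [H1 H2]]] H3]]|[p1 [H1 H2]]].
  + left; exists p1; split=> //.
    by apply: pc_trans H3; apply: pc_trans (pc_sym (pc_parA _ _ _)) _; auto.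
  + right; exists (Par p1 r); split; first by left; exists p1.
    by apply: pc_trans H3; apply: pc_trans (pc_sym (pc_parA _ _ _)) _; auto.
  + right; exists (Par q p1); split; first by right; exists p1.
    exact: pc_trans (pc_sym (pc_parA _ _ _)) H2.
- case=> [[p1 [H1 H2]]|[y [[[p1 [H1 H2]]|[p1 [H1 H2]]] H3]]].
  + left; exists (Par p1 q); split; first by left; exists p1.
    exact: pc_trans (pc_parA _ _ _) H2.
  + left; exists (Par p p1); split; first by right; exists p1.
    by apply: pc_trans H3; apply: pc_trans (pc_parA _ _ _) _; auto.
  + right; exists p1; split=> //.
    by apply: pc_trans H3; apply: pc_trans (pc_parA _ _ _) _; auto.
Qed.

Lemma trans_parC l x : trans (Par p q) l x -> trans (Par q p) l x.
Proof.
by case=> [[p1 [H1 H2]]|[p1 [H1 H2]]]; [right|left]; exists p1;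
  split=> //; exact: pc_trans (pc_parC _ _) H2.
Qed.

End CongruenceCases.

Lemma trans_pcong p q : pc p q -> forall l r, trans p l r <-> trans q l r.
Proof.
elim=> {p q} //.
- by move=> p q _ IH l r; split => /IH.
- by move=> p q r _ IH1 _ IH2 l x; rewrite IH1 IH2.
- move=> p p' q q' Hp IHp Hq IHq l r /=; have Ep := inert_pcong Hp.
  split; case=> [[p1 [/IHp H1 H2]]|[H1 /IHq H2]]; try by right; split=> //; tauto.
  + by left; exists p1; split=> //; apply: pc_trans H2; auto.
  + by left; exists p1; split=> //; apply: pc_trans H2; auto.
- move=> p p' q q' Hp IHp Hq IHq l r /=.
  split; case=> [[p1 [/IHp H1 H2]]|[p1 [/IHq H1 H2]]];
    (left + right); exists p1; split=> //; apply: pc_trans H2; auto.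
- exact: trans_seqA.
- exact: trans_parA.
- by move=> p q l r; split; apply: trans_parC.
- by move=> p l r /=; split => [[[p1 [[] _]]|[_ H]] //|H]; right.
- move=> p l r /=; split => [[[p1 [H1 H2]]|[_ []]] //|H].
  + by apply: trans_pcongr H1 _; exact: pc_trans (pc_sym (pc_seq_epsr _)) H2.
  + by left; exists r; split=> //; exact: pc_seq_epsr.
- move=> p l r /=; split => [[[p1 [[] _]]|[p1 [H1 H2]]]|H] //.
  + by apply: trans_pcongr H1 _; exact: pc_trans (pc_sym (pc_par_epsl _)) H2.
  + by right; exists r; split=> //; exact: pc_par_epsl.
Qed.

Lemma sstep_trans p l q : sstep Delta p l q -> trans p l q.
Proof.
elim=> {p l q} /= [c l p H|p l p' q _ H|p l p' q _ H|p l p' q _ H].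
- by exists p.
- by left; exists p'.
- by left; exists p'.
- by right; exists p'.
Qed.

Lemma trans_step p l r : trans p l r -> step Delta p l r.
Proof.
elim: p l r => [|c|p1 IH1 p2 IH2|p1 IH1 p2 IH2] l r //=.
- case=> p' [H1 H2]; exists (Cst c), p'; split=> //; split=> //; exact: ss_rule.
- case=> [[p1' [/IH1 [Q [Q' [HQ [HS HQ']]]] H2]]|[/inert_pcong_Eps H1 /IH2]].
  + exists (Seq Q p2), (Seq Q' p2); split; first exact: pc_seq.
    by split; [exact: ss_seq|apply: pc_trans H2; exact: pc_seq].
  + case=> Q [Q' [HQ HS]]; exists Q, Q'; split=> //; apply: pc_trans HQ.
    exact: pc_trans (pc_seq H1 (pc_refl p2)) (pc_seq_epsl _).
- case=> [[p1' [/IH1 [Q [Q' [HQ [HS HQ']]]] H2]]|[p2' [/IH2 [Q [Q' [HQ [HS HQ']]]] H2]]].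
  + exists (Par Q p2), (Par Q' p2); split; first exact: pc_par.
    by split; [exact: ss_parl|apply: pc_trans H2; exact: pc_par].
  + exists (Par p1 Q), (Par p1 Q'); split; first exact: pc_par.
    by split; [exact: ss_parr|apply: pc_trans H2; exact: pc_par].
Qed.

Lemma step_trans p l r : step Delta p l r -> trans p l r.
Proof.
case=> Q [Q' [H1 [/sstep_trans H2 H3]]].
by apply/(trans_pcong H1); exact: trans_pcongr H2 H3.
Qed.

Lemma step_pcong p p' l q q' : pc p p' -> pc q q' -> step Delta p l q -> step Delta p' l q'.
Proof.
move=> Hp Hq /step_trans H; apply: trans_step; apply/(trans_pcong (pc_sym Hp)).
exact: trans_pcongr H Hq.
Qed.

Definition silent p q := exists q1, tau_steps Delta tau p q1 /\ pc q1 q.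

Lemma tau_steps_pcong p q p' : tau_steps Delta tau p q -> pc p p' ->
  exists q', tau_steps Delta tau p' q' /\ pc q q'.
Proof.
move/clos_rt_rt1n_iff; case=> [|y z Hy Hz] Hp; first by exists p'; split; [exact: rt_refl|].
exists z; split=> //; apply: rt_trans (rt_step _ _ _ _ (step_pcong Hp (pc_refl y) Hy)) _.
exact/clos_rt_rt1n_iff.
Qed.

Lemma silent_pcong p p' q q' : pc p p' -> pc q q' -> silent p q -> silent p' q'.
Proof.
move=> Hp Hq [q1 [/tau_steps_pcong/(_ Hp) [q2 [H3 H4]] H2]].
by exists q2; split=> //; apply: pc_trans Hq; exact: pc_trans (pc_sym H4) H2.
Qed.

Lemma pcong_silent p q : pc p q -> silent p q.
Proof. by move=> H; exists p; split=> //; exact: rt_refl. Qed.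

Lemma silent_trans p q r : silent p q -> silent q r -> silent p r.
Proof.
move=> [q1 [H1 H2]] [r1 [/tau_steps_pcong/(_ (pc_sym H2)) [r2 [H5 H6]] H4]].
by exists r2; split; [exact: rt_trans H1 H5|exact: pc_trans (pc_sym H6) H4].
Qed.

Lemma trans_silent p q : trans p tau q -> silent p q.
Proof. by move=> H; exists q; split; [apply: rt_step; exact: trans_step|]. Qed.

Lemma silent_ctx (f : proc C -> proc C) :
  (forall p q, trans p tau q -> trans (f p) tau (f q)) ->
  (forall p q, pc p q -> pc (f p) (f q)) ->
  forall p q, silent p q -> silent (f p) (f q).
Proof.
move=> Hf Hg p q [q1 [H1 H2]]; exists (f q1); split; last exact: Hg.
elim: H1 {H2} => {p q1} [x y /step_trans/Hf/trans_step|x|x y z _ H1 _ H2].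
- exact: rt_step.
- exact: rt_refl.
- exact: rt_trans H1 H2.
Qed.

Lemma silent_parl p q r : silent p q -> silent (Par p r) (Par q r).
Proof. by apply: (silent_ctx (f := fun x => Par x r)) => x y H /=; [left; exists y|auto]. Qed.

Lemma silent_parr p q r : silent p q -> silent (Par r p) (Par r q).
Proof. by apply: (silent_ctx (f := Par r)) => x y H /=; [right; exists y|auto]. Qed.

Lemma silent_seql p q r : silent p q -> silent (Seq p r) (Seq q r).
Proof. by apply: (silent_ctx (f := fun x => Seq x r)) => x y H /=; [left; exists y|auto]. Qed.

Lemma silent_seq_Eps p q : silent p Eps -> silent (Seq p q) q.
Proof. by move/(silent_seql q)/silent_trans; apply; apply: pcong_silent. Qed.

Section Answers.
Variable B : proc C -> proc C -> Prop.

Definition answers P Q l P' :=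
  (exists Q'' Q', tau_steps Delta tau Q Q'' /\ step Delta Q'' l Q'
                  /\ B P Q'' /\ B P' Q') \/ (l = tau /\ B P' Q).

Lemma branching_bisimulation_of_answers :
  (forall P Q, B P Q -> B Q P) ->
  (forall P Q l P', B P Q -> step Delta P l P' -> answers P Q l P') ->
  branching_bisimulation Delta tau B.
Proof.
move=> Bsym HB; split; first exact: HB.
move=> P Q l Q' /Bsym/HB HQ /HQ [[Q'' [P' [H1 [H2 [H3 H4]]]]]|[-> H]].
- by left; exists Q'', P'; do 2 (split=> //); split; apply: Bsym.
- by right; split=> //; apply: Bsym.
Qed.

Hypothesis B_pcongr : forall P Q Q', B P Q -> pc Q Q' -> B P Q'.

Lemma answers_silent P Q l P' Q2 Q' :
  silent Q Q2 -> trans Q2 l Q' -> B P Q2 -> B P' Q' -> answers P Q l P'.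
Proof.
move=> [Q1 [H1 H2]] H3 H4 H5; left; exists Q1, Q'; split=> //; split.
- by apply: step_pcong (pc_sym H2) (pc_refl _) _; exact: trans_step.
- by split=> //; apply: B_pcongr H4 _; exact: pc_sym.
Qed.

Lemma answers_stay P Q P' : B P' Q -> answers P Q tau P'.
Proof. by right. Qed.

End Answers.

Fixpoint par_list (s : seq (proc C)) : proc C :=
  if s is t :: s then Par t (par_list s) else Eps.

Lemma perm_par_list s1 s2 : Permutation s1 s2 -> pc (par_list s1) (par_list s2).
Proof.
elim=> {s1 s2} //= [x s s' _|x y s|s s' s'' _ H1 _ H2]; first exact: pc_par.
- apply: pc_trans (pc_sym (pc_parA _ _ _)) _.
  exact: pc_trans (pc_par (pc_parC _ _) (pc_refl _)) (pc_parA _ _ _).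
- exact: pc_trans H1 H2.
Qed.

Lemma par_list_mid s1 t s2 : pc (par_list (s1 ++ t :: s2)) (Par t (par_list (s1 ++ s2))).
Proof. apply: (@perm_par_list _ (t :: s1 ++ s2)); apply: Permutation_sym;
  exact: Permutation_middle. Qed.

Lemma pcong_par_list_mid s1 t t' s2 : pc t t' ->
  pc (par_list (s1 ++ t :: s2)) (par_list (s1 ++ t' :: s2)).
Proof.
move=> H; apply: pc_trans (par_list_mid _ _ _) _.
by apply: pc_trans _ (pc_sym (par_list_mid _ _ _)); exact: pc_par.
Qed.

Lemma trans_par_listP s x r : trans (par_list s) x r ->
  exists s1 t s2 t', s = s1 ++ t :: s2 /\ trans t x t' /\ pc r (par_list (s1 ++ t' :: s2)).
Proof.
elim: s r => [|t s IH] r //= [[t' [H1 H2]]|[p2 [/IH [s1 [t0 [s2 [t' [-> [H3 H4]]]]]] H2]]].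
- by exists [::], t, s, t'; do 2 (split=> //); exact: pc_sym.
- exists (t :: s1), t0, s2, t'; do 2 (split=> //).
  exact: pc_trans (pc_sym H2) (pc_par (pc_refl _) H4).
Qed.

Lemma trans_par_list_mid s1 t s2 x t' : trans t x t' ->
  trans (par_list (s1 ++ t :: s2)) x (par_list (s1 ++ t' :: s2)).
Proof.
elim: s1 => /= [|y s1 IH] H; first by left; exists t'.
by right; exists (par_list (s1 ++ t' :: s2)); split; auto.
Qed.

Lemma silent_par_list_mid s1 t s2 t' : silent t t' ->
  silent (par_list (s1 ++ t :: s2)) (par_list (s1 ++ t' :: s2)).
Proof.
move/(silent_parl (par_list (s1 ++ s2))).
by apply: silent_pcong; apply: pc_sym; exact: par_list_mid.
Qed.

Fixpoint thread (w : seq C) : proc C :=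
  if w is c :: w then Seq (Cst c) (thread w) else Eps.

Lemma thread_cat w1 w2 : pc (Seq (thread w1) (thread w2)) (thread (w1 ++ w2)).
Proof.
elim: w1 => /= [|c w1 IH]; first exact: pc_seq_epsl.
exact: pc_trans (pc_seqA _ _ _) (pc_seq (pc_refl _) IH).
Qed.

Lemma trans_threadE c w l r :
  trans (thread (c :: w)) l r <-> exists p, Delta c l p /\ pc r (Seq p (thread w)).
Proof.
split=> /= [[[p1 [[p' [H1 H2]] H3]]|[[] _]]|[p [H1 H2]]].
- by exists p'; split=> //; exact: pc_trans (pc_sym H3) (pc_seq (pc_sym H2) (pc_refl _)).
- by left; exists p; split; [exists p|exact: pc_sym].
Qed.

Lemma trans_head c l p ws w : Delta c l p -> pc p (thread ws) ->
  trans (thread (c :: w)) l (thread (ws ++ w)).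
Proof.
move=> H1 H2; apply/trans_threadE; exists p; split=> //.
exact: pc_trans (pc_sym (thread_cat _ _)) (pc_seq (pc_sym H2) (pc_refl _)).
Qed.

Lemma trans_head0 c l w : Delta c l Eps -> trans (thread (c :: w)) l (thread w).
Proof. by move=> H; apply: (trans_head (ws := [::]) _ H). Qed.

Lemma trans_head1 c d l w : Delta c l (Cst d) -> trans (thread (c :: w)) l (thread (d :: w)).
Proof. by move=> H; apply: (trans_head (ws := [:: d]) _ H); exact: pc_sym (pc_seq_epsr _). Qed.

Lemma trans_head2 c d e l w : Delta c l (Seq (Cst d) (Cst e)) ->
  trans (thread (c :: w)) l (thread (d :: e :: w)).
Proof.
move=> H; apply: (trans_head (ws := [:: d; e]) _ H).
exact: pc_seq (pc_refl _) (pc_sym (pc_seq_epsr _)).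
Qed.

Lemma silent_generate g (Pc : C -> Prop) :
  (forall c, Pc c -> Delta g tau (Seq (Cst g) (Cst c))) ->
  forall ws w, all_prop Pc ws -> silent (thread (g :: w)) (thread (g :: ws ++ w)).
Proof.
move=> Hg; elim=> [|c ws IH] w /= => [_|[Hc Hws]]; first exact: pcong_silent.
apply: silent_trans (IH w Hws) _; apply: trans_silent; exact: trans_head2 (Hg c Hc).
Qed.

Lemma silent_generate0 g (Pc : C -> Prop) :
  (forall c, Pc c -> Delta g tau (Seq (Cst g) (Cst c))) ->
  forall ws, all_prop Pc ws -> silent (thread [:: g]) (thread (g :: ws)).
Proof. by move=> Hg ws /(silent_generate Hg [::]); rewrite cats0. Qed.

Lemma silent_spawn c g t : Delta c tau (Par (Cst c) (Cst g)) -> silent (thread [:: g]) t ->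
  silent (Cst c) (Par (Cst c) t).
Proof.
move=> H1 /(silent_parr (Cst c)); apply: silent_trans; apply: trans_silent.
by exists (Par (Cst c) (Cst g)); split=> //; exact: pc_par (pc_refl _) (pc_sym (pc_seq_epsr _)).
Qed.

Lemma silent_spawn_more c t t' :
  silent (Cst c) (Par (Cst c) t) -> silent t t' -> silent (Cst c) (Par (Cst c) t').
Proof. by move=> H1 H2; exact: silent_trans H1 (silent_parr _ H2). Qed.

Section Control.
Variable c : C.

Lemma step_ctrl_parP L P0 l P' : pc P0 (Par (Cst c) (par_list L)) -> step Delta P0 l P' ->
  (exists p, Delta c l p /\ pc P' (Par p (par_list L))) \/
  (exists s1 t s2 t', L = s1 ++ t :: s2 /\ trans t l t' /\
      pc P' (Par (Cst c) (par_list (s1 ++ t' :: s2)))).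
Proof.
move=> H /step_trans/(trans_pcong H) /= [[p1 [[p [H1 H2]] H3]]|[X [H1 H2]]].
- by left; exists p; split=> //; apply: pc_sym; exact: pc_trans (pc_par H2 (pc_refl _)) H3.
- case: (trans_par_listP H1) => s1 [t [s2 [t' [E [H4 H5]]]]].
  right; exists s1, t, s2, t'; do 2 (split=> //).
  exact: pc_sym (pc_trans (pc_par (pc_refl _) (pc_sym H5)) H2).
Qed.

Lemma trans_ctrl l p L : Delta c l p -> trans (Par (Cst c) (par_list L)) l (Par p (par_list L)).
Proof. by move=> H; left; exists p; split=> //; exists p. Qed.

Lemma trans_comp l t t' s1 s2 : trans t l t' ->
  trans (Par (Cst c) (par_list (s1 ++ t :: s2))) l (Par (Cst c) (par_list (s1 ++ t' :: s2))).
Proof. by move=> H; right; exists (par_list (s1 ++ t' :: s2)); split;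
  [exact: trans_par_list_mid|]. Qed.

Lemma silent_comp t t' s1 s2 : silent t t' ->
  silent (Par (Cst c) (par_list (s1 ++ t :: s2))) (Par (Cst c) (par_list (s1 ++ t' :: s2))).
Proof. by move=> H; apply: silent_parr; exact: silent_par_list_mid. Qed.

Lemma silent_produce S L : List.Forall (fun e => silent (Cst c) (Par (Cst c) e)) S ->
  silent (Par (Cst c) (par_list L)) (Par (Cst c) (par_list (S ++ L))).
Proof.
elim: S => /= [|e S IH] H; first exact: pcong_silent.
case/List.Forall_cons_iff: H => H1 /IH H2.
apply: silent_trans H2 _; apply: silent_trans (silent_parl _ H1) _.
exact: pcong_silent (pc_parA _ _ _).
Qed.

Lemma silent_vanish S L : List.Forall (fun e => silent e Eps) S ->
  silent (Par (Cst c) (par_list (S ++ L))) (Par (Cst c) (par_list L)).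
Proof.
elim: S => /= [|e S IH] H; first exact: pcong_silent.
case/List.Forall_cons_iff: H => H1 /IH H2.
apply: silent_trans _ H2; apply: silent_parr; apply: silent_trans (silent_parl _ H1) _.
exact: pcong_silent (pc_par_epsl _).
Qed.

End Control.

End Semantics.

Arguments pcong_silent {C A Delta tau p q}.

(** * Silent behaviour in the algebra G *)

Section Algebra.
Variables (Sigma : finType) (n : nat) (u v : 'I_n -> seq Sigma).

Local Notation C := (gconst Sigma n).
Local Notation P := (proc C).
Local Notation Delta := (G_rules u v).
Local Notation tau := (@gtau Sigma n).
Local Notation pc := (@pcong C).
Local Notation trans := (trans Delta).
Local Notation silent := (silent Delta tau).
Local Notation thread := (@thread C).
Local Notation par_list := (@par_list C).
Local Hint Constructors pcong : core.

(* Constants other than the control constants X, Y, D, C, I, S, C'; for the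
   W-constants this excludes the junk ones outside the set W of the paper. *)
Definition passive_const (c : C) : Prop :=
  match c with
  | cX | cY | cD | cC | cI | cS | cC' => False
  | cW w k => validW u v w k
  | _ => True
  end.

Fixpoint passive (p : P) : Prop :=
  match p with
  | Eps => True
  | Cst c => passive_const c
  | Seq a b => passive a /\ passive b
  | Par a b => passive a /\ passive b
  end.

Lemma validW_cons a w k : validW u v (a :: w) k -> validW u v w k.
Proof.
case: k => [k|] /=.
- by case/orP => H; apply/orP; [left|right]; apply: suffix_trans H; exact: suffix_cons.
- case=> k /orP H; exists k; apply/orP.
  by case: H => H; [left|right]; apply: suffix_trans H; exact: suffix_cons.
Qed.

Lemma validW_None w k : validW u v w (Some k) -> validW u v w None.
Proof. by move=> H; exists k. Qed.

Lemma silent_const_Eps c p : Delta c tau p -> silent p Eps -> silent (Cst c) Eps.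
Proof.
move=> H1 H2; apply: silent_trans H2; apply: trans_silent => /=; exists p; split=> //.
Qed.

Lemma W_vanishes w k : validW u v w k -> silent (Cst (cW w k)) Eps.
Proof.
elim: w k => [|a w IH] k Hv.
- case: k Hv => [k|] Hv.
  + apply: (@silent_const_Eps _ (Cst (cW [::] None))); first exact: r_W_kt.
    apply: (@silent_const_Eps _ Eps); [apply: r_W_e; exact: validW_None Hv|exact: pcong_silent].
  + apply: (@silent_const_Eps _ Eps); [exact: r_W_e|exact: pcong_silent].
- apply: (@silent_const_Eps _ (Cst (cW w k))); first exact: r_W_at.
  apply: IH; exact: validW_cons Hv.
Qed.

Lemma U_vanishes k : silent (Cst (cU k)) Eps.
Proof.
apply: (@silent_const_Eps _ (Cst (cW (u k) (Some k)))); first exact: r_U.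
apply: W_vanishes => /=; apply/orP; left; exact: suffix_refl.
Qed.

Lemma V_vanishes k : silent (Cst (cV k)) Eps.
Proof.
apply: (@silent_const_Eps _ (Cst (cW (v k) (Some k)))); first exact: r_V.
apply: W_vanishes => /=; apply/orP; right; exact: suffix_refl.
Qed.

Lemma Z_vanishes : silent (Cst cZ) Eps.
Proof. apply: (@silent_const_Eps _ Eps); [exact: r_Z_t|exact: pcong_silent]. Qed.

Lemma passive_const_vanishes c : passive_const c -> silent (Cst c) Eps.
Proof.
case: c => /= [|||||||||||||k|k|w k] Hv //.
- exact: Z_vanishes.
- apply: (@silent_const_Eps _ Eps); [exact: r_G_e|exact: pcong_silent].
- apply: (@silent_const_Eps _ (Cst cZ)); [exact: r_G'_Z|exact: Z_vanishes].
- apply: (@silent_const_Eps _ (Cst cGv')); first exact: r_Gu_t'.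
  apply: (@silent_const_Eps _ (Cst cZ)); [exact: r_Gv'_Z|exact: Z_vanishes].
- apply: (@silent_const_Eps _ Eps); [exact: r_Gv_e|exact: pcong_silent].
- apply: (@silent_const_Eps _ (Cst cZ)); [exact: r_Gv'_Z|exact: Z_vanishes].
- exact: U_vanishes.
- exact: V_vanishes.
- exact: W_vanishes.
Qed.

Lemma passive_vanishes p : passive p -> silent p Eps.
Proof.
elim: p => [|c|p1 IH1 p2 IH2|p1 IH1 p2 IH2] /=.
- move=> _; exact: pcong_silent.
- exact: passive_const_vanishes.
- case=> V1 V2; apply: silent_trans (silent_seq_Eps _ (IH1 V1)) (IH2 V2).
- case=> V1 V2; apply: silent_trans (silent_parl _ (IH1 V1)) _.
  apply: silent_trans (silent_parr _ (IH2 V2)) _; apply: pcong_silent; exact: pc_par_epsl.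
Qed.

Lemma trans_Gv_threadP w l r : trans (thread (cGv :: w)) l r ->
  (l = tau /\ exists k, pc r (thread (cGv :: cV k :: w))) \/ (l = tau /\ pc r (thread w))
  \/ (l = lamV /\ pc r (thread (cZ :: w))).
Proof.
move/trans_threadE => [p [H1 H2]]; inversion H1; subst.
- left; split=> //; exists k; apply: pc_trans H2 _; exact: pc_seqA.
- right; left; split=> //; apply: pc_trans H2 _; exact: pc_seq_epsl.
- by right; right; split.
Qed.

Lemma trans_Z_threadP w l r : trans (thread (cZ :: w)) l r -> (l = tau \/ l = lamZ)
  /\ pc r (thread w).
Proof.
move/trans_threadE => [p [H1 H2]]; inversion H1; subst.
- split; [by left|apply: pc_trans H2 _; exact: pc_seq_epsl].
- split; [by right|apply: pc_trans H2 _; exact: pc_seq_epsl].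
Qed.

Definition plain_const (c : C) : Prop :=
  match c with cU _ | cV _ => True | cW w k => validW u v w k | _ => False end.
Definition plain := all_prop plain_const.

Definition const_letters (c : C) : seq Sigma :=
  match c with cU k => u k | cV k => v k | cW w _ => w | _ => [::] end.
Definition const_indices (c : C) : seq 'I_n :=
  match c with cU k | cV k | cW _ (Some k) => [:: k] | _ => [::] end.
Definition letters (w : seq C) := flatten (map const_letters w).
Definition indices (w : seq C) := flatten (map const_indices w).

Lemma letters_cons c w : letters (c :: w) = const_letters c ++ letters w. Proof. by []. Qed.
Lemma indices_cons c w : indices (c :: w) = const_indices c ++ indices w. Proof. by []. Qed.

Lemma plain_passive w : plain w -> passive (thread w).
Proof. elim: w => //= c w IH [Hc Hw]; split; [by case: c Hc|exact: IH]. Qed.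

Lemma trans_plainP w l r : plain w -> trans (thread w) l r ->
  exists w2, pc r (thread w2) /\ plain w2 /\
  ((letters w2 = letters w /\ (l = tau \/ exists k, l = actN k))
     \/ (exists a, letters w = a :: letters w2 /\ (l = tau \/ l = actS a))) /\
  ((indices w2 = indices w /\ (l = tau \/ exists a, l = actS a))
     \/ (exists k, indices w = k :: indices w2 /\ (l = tau \/ l = actN k))).
Proof.
case: w => [|c w] //= [Hc Hw] /trans_threadE [p [H1 H2]].
case: c Hc H1 => //= [k|k|w0 k0] Hc H1; inversion H1; subst.
- exists (cW (u k) (Some k) :: w); split; first by apply: pc_trans H2 _.
  split; first by split=> //=; apply/orP; left; exact: suffix_refl.
  by split; left; split=> //; left.
- exists (cW (v k) (Some k) :: w); split; first by apply: pc_trans H2 _.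
  split; first by split=> //=; apply/orP; right; exact: suffix_refl.
  by split; left; split=> //; left.
- exists (cW w1 k0 :: w); split; first by apply: pc_trans H2 _.
  split; first by split=> //; exact: validW_cons Hc.
  split; first by right; exists a; split=> //; right.
  left; split; [by destruct k0|right; by exists a].
- exists (cW w0 None :: w); split; first by apply: pc_trans H2 _.
  split; first by split=> //; exact: validW_None Hc.
  split; first by left; split=> //; right; exists k.
  by right; exists k; split=> //; right.
- exists (cW w1 k0 :: w); split; first by apply: pc_trans H2 _.
  split; first by split=> //; exact: validW_cons Hc.
  split; first by right; exists a; split=> //; left.
  left; split; [by destruct k0|by left].
- exists (cW w0 None :: w); split; first by apply: pc_trans H2 _.
  split; first by split=> //; exact: validW_None Hc.
  split; first by left; split=> //; left.
  by right; exists k; split=> //; left.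
- exists w; split; first by apply: pc_trans H2 _; exact: pc_seq_epsl.
  split=> //; split; by left; split=> //; left.
Qed.

Lemma silent_head c w : silent (Cst c) Eps -> silent (thread (c :: w)) (thread w).
Proof. move=> H /=; exact: silent_seq_Eps H. Qed.

Lemma plain_letter_move (Hu : forall k, u k != [::]) (Hv : forall k, v k != [::]) w a rho x :
  plain w -> letters w = a :: rho -> (x = tau \/ x = actS a) ->
  exists w1 w2, silent (thread w) (thread w1) /\ trans (thread w1) x (thread w2) /\
    plain w1 /\ plain w2 /\ letters w1 = letters w /\ letters w2 = rho.
Proof.
move=> + + Hx; elim: w => [|c w IH] //= [Hc Hw].
case: c Hc => //= [k|k|w0 k0] Hc.
- case E: (u k) (Hu k) => [|b beta] // _; rewrite letters_cons /= E /= => [[Ea Erho]]; subst a rho.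
  have Hv0 : validW u v (b :: beta) (Some k) by apply/orP; left; rewrite -E suffix_refl.
  exists (cW (u k) (Some k) :: w), (cW beta (Some k) :: w); split.
  + apply: trans_silent; apply: trans_head1; exact: r_U.
  split; first by rewrite E; case: Hx => ->; apply: trans_head1;
     [exact: r_W_at|exact: r_W_a].
  split; first by split=> //; rewrite E.
  split; first by split=> //; exact: validW_cons Hv0.
  by rewrite /letters /= E.
- case E: (v k) (Hv k) => [|b beta] // _; rewrite letters_cons /= E /= => [[Ea Erho]]; subst a rho.
  have Hv0 : validW u v (b :: beta) (Some k) by apply/orP; right; rewrite -E suffix_refl.
  exists (cW (v k) (Some k) :: w), (cW beta (Some k) :: w); split.
  + apply: trans_silent; apply: trans_head1; exact: r_V.
  split; first by rewrite E; case: Hx => ->; apply: trans_head1;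
     [exact: r_W_at|exact: r_W_a].
  split; first by split=> //; rewrite E.
  split; first by split=> //; exact: validW_cons Hv0.
  by rewrite /letters /= E.
- case: w0 Hc => [|b beta] Hc.
  + rewrite letters_cons /= => HL.
    case: (IH Hw HL) => w1 [w2 [H1 [H2 [H3 [H4 [H5 H6]]]]]].
    exists w1, w2; split=> //.
    apply: silent_trans H1; apply: silent_head => //; exact: W_vanishes.
  + rewrite letters_cons /= => [[Ea Erho]]; subst a rho.
    exists (cW (b :: beta) k0 :: w), (cW beta k0 :: w); split; first exact: pcong_silent.
    split; first by case: Hx => ->; apply: trans_head1; [exact: r_W_at|exact: r_W_a].
    split=> //; split; first by split=> //; exact: validW_cons Hc.
    by [].
Qed.

Lemma plain_index_move w k kap x :
  plain w -> indices w = k :: kap -> (x = tau \/ x = actN k) ->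
  exists w1 w2, silent (thread w) (thread w1) /\ trans (thread w1) x (thread w2) /\
    plain w1 /\ plain w2 /\ indices w1 = indices w /\ indices w2 = kap.
Proof.
move=> + + Hx; elim: w => [|c w IH] //= [Hc Hw].
case: c Hc => //= [j|j|w0 k0] Hc.
- rewrite indices_cons /= => [[Ek Ekap]]; subst k kap.
  have Hv0 : validW u v (u j) (Some j) by apply/orP; left; exact: suffix_refl.
  exists (cW (u j) (Some j) :: w), (cW (u j) None :: w); split.
  + apply: trans_silent; apply: trans_head1; exact: r_U.
  split; first by case: Hx => ->; apply: trans_head1; [exact: r_W_kt|exact: r_W_k].
  split; first by split.
  by split; first by split=> //; exact: validW_None Hv0.
- rewrite indices_cons /= => [[Ek Ekap]]; subst k kap.
  have Hv0 : validW u v (v j) (Some j) by apply/orP; right; exact: suffix_refl.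
  exists (cW (v j) (Some j) :: w), (cW (v j) None :: w); split.
  + apply: trans_silent; apply: trans_head1; exact: r_V.
  split; first by case: Hx => ->; apply: trans_head1; [exact: r_W_kt|exact: r_W_k].
  split; first by split.
  by split; first by split=> //; exact: validW_None Hv0.
- case: k0 Hc => [j|] Hc.
  + rewrite indices_cons /= => [[Ek Ekap]]; subst k kap.
    exists (cW w0 (Some j) :: w), (cW w0 None :: w); split; first exact: pcong_silent.
    split; first by case: Hx => ->; apply: trans_head1; [exact: r_W_kt|exact: r_W_k].
    split=> //; split; first by split=> //; exact: validW_None Hc.
    by [].
  + rewrite indices_cons /= => HK.
    case: (IH Hw HK) => w1 [w2 [H1 [H2 [H3 [H4 [H5 H6]]]]]].
    exists w1, w2; split=> //.
    apply: silent_trans H1; apply: silent_head => //; exact: W_vanishes.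
Qed.

Definition const_of (x : bool * 'I_n) : C := if x.1 then cU x.2 else cV x.2.

Lemma D_spawns_Gu r : silent (Cst cD) (Par (Cst cD) (thread (cGu :: map cU r))).
Proof.
apply: silent_spawn; first exact: r_D_t.
apply: (silent_generate0 (Pc := fun c => exists k, c = cU k)); first by move=> c [k ->];
  exact: r_Gu_t.
by apply: all_prop_map => k; exists k.
Qed.

Lemma D_spawns_Z t r : silent (Cst cD) (Par (Cst cD) (thread (cZ :: map cV t ++ map cU r))).
Proof.
apply: silent_spawn_more (D_spawns_Gu r) _.
apply: silent_trans (trans_silent (trans_head1 (map cU r) (r_Gu_t' u v))) _.
have Hg : forall c, (exists k, c = cV k) -> Delta cGv' tau (Seq (Cst cGv') (Cst c)).
  by move=> c [k ->]; exact: r_Gv'_t.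
apply: silent_trans (silent_generate (ws := map cV t) Hg (map cU r) _) _.
  by apply: all_prop_map => k; exists k.
apply: trans_silent; apply: trans_head1; exact: r_Gv'_Z.
Qed.

Lemma D_spawns_plain t r : silent (Cst cD) (Par (Cst cD) (thread (map cV t ++ map cU r))).
Proof.
apply: silent_spawn_more (D_spawns_Z t r) _; apply: trans_silent; apply: trans_head0; exact: r_Z_t.
Qed.

Lemma C_spawns_Gv t : silent (Cst cC) (Par (Cst cC) (thread (cGv :: map cV t))).
Proof.
apply: silent_spawn; first exact: r_C_Gv.
apply: (silent_generate0 (Pc := fun c => exists k, c = cV k)); first by move=> c [k ->];
  exact: r_Gv_t.
by apply: all_prop_map => k; exists k.
Qed.

Lemma C_spawns_plain y : silent (Cst cC) (Par (Cst cC) (thread (map const_of y))).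
Proof.
apply: silent_spawn; first exact: r_C_G.
have Hg : forall c, (exists x, c = const_of x) -> Delta cG tau (Seq (Cst cG) (Cst c)).
  move=> c [[[] k] ->] /=; [exact: r_G_U|exact: r_G_V].
apply: silent_trans (silent_generate0 (ws := map const_of y) Hg _) _.
  by apply: all_prop_map => x; exists x.
apply: trans_silent; apply: trans_head0; exact: r_G_e.
Qed.

Lemma C'_spawns_G' w : plain w -> silent (Cst cC') (Par (Cst cC') (thread (cG' :: w))).
Proof.
move=> Hw; apply: silent_spawn; first exact: r_C'_t.
have Hg : forall c, plain_const c -> Delta cG' tau (Seq (Cst cG') (Cst c)).
  by case=> //= [k|k|w0 k0] Hc; [exact: r_G'_U|exact: r_G'_V|exact: r_G'_W].
exact: (silent_generate0 Hg Hw).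
Qed.

Lemma C'_spawns_Gv w : plain w -> silent (Cst cC') (Par (Cst cC') (thread (cGv :: w))).
Proof.
move=> Hw; apply: silent_spawn_more (C'_spawns_G' Hw) _; apply: trans_silent; apply: trans_head1.
exact: r_G'_Gv.
Qed.

Lemma C'_spawns_Z w : plain w -> silent (Cst cC') (Par (Cst cC') (thread (cZ :: w))).
Proof.
move=> Hw; apply: silent_spawn_more (C'_spawns_G' Hw) _; apply: trans_silent; apply: trans_head1.
exact: r_G'_Z.
Qed.

Lemma C'_spawns_plain w : plain w -> silent (Cst cC') (Par (Cst cC') (thread w)).
Proof.
move=> Hw; apply: silent_spawn_more (C'_spawns_Gv Hw) _; apply: trans_silent; apply: trans_head0.
exact: r_Gv_e.
Qed.

(** * The bisimulation *)

Definition D_spawnable (E : P) := silent (Cst cD) (Par (Cst cD) E) /\ passive E.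
Definition C_spawnable (t : P) := silent (Cst cC) (Par (Cst cC) t) /\ passive t.
Definition C'_spawnable (t : P) := silent (Cst cC') (Par (Cst cC') t) /\ passive t.

Definition ucat (r : seq 'I_n) := flatten (map u r).
Definition vcat (r : seq 'I_n) := flatten (map v r).

Definition balanced_Gv (t : P) := exists x r,
  t = thread (cGv :: map cV x ++ map cU r) /\ ucat r = vcat r.
Definition balancedC (t : P) := exists y,
  t = thread (cGv :: map const_of y) /\ letters (map const_of y) = vcat (indices (map const_of y)).
Definition absorbable t := C_spawnable t \/ balancedC t.
Definition Z_twins (t t' : P) := exists y y',
  t = thread (cZ :: map const_of y) /\ t' = thread (cZ :: map const_of y') /\
  letters (map const_of y) = letters (map const_of y') /\ indices (map const_of y) = indices
    (map const_of y').
Definition C_twins t t' := t = t' \/ Z_twins t t'.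
Definition trace_twins T (F : seq C -> seq T) (t t' : P) := exists w w',
  plain w /\ plain w' /\ F w = F w' /\
  ((t = thread w /\ t' = thread w') \/ (t = thread (cGv :: w) /\ t' = thread (cGv :: w'))
   \/ (t = thread (cZ :: w) /\ t' = thread (cZ :: w'))).
Definition same_trace T (F : seq C -> seq T) t t' := t = t' \/ trace_twins F t t'.

Definition D_lists (L1 L2 : seq P) := exists G B1 B2 E1 E2,
  Permutation L1 (G ++ B1 ++ E1) /\ Permutation L2 (G ++ B2 ++ E2) /\
  List.Forall balanced_Gv B1 /\ List.Forall balanced_Gv B2 /\ size B1 = size B2 /\
  List.Forall D_spawnable E1 /\ List.Forall D_spawnable E2.
Definition C_lists (L1 L2 : seq P) := exists H1 H2 A1 A2,
  Permutation L1 (H1 ++ A1) /\ Permutation L2 (H2 ++ A2) /\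
  List.Forall2 C_twins H1 H2 /\ List.Forall absorbable A1 /\ List.Forall absorbable A2.
Definition I_lists := List.Forall2 (same_trace letters).
Definition S_lists := List.Forall2 (same_trace indices).
Definition C'_lists (L1 L2 : seq P) := exists H S1 S2,
  Permutation L1 (H ++ S1) /\ Permutation L2 (H ++ S2) /\
  List.Forall C'_spawnable S1 /\ List.Forall C'_spawnable S2.

Definition phase c (R : seq P -> seq P -> Prop) (P1 P2 : P) := exists L1 L2,
  R L1 L2 /\ pc P1 (Par (Cst c) (par_list L1)) /\ pc P2 (Par (Cst c) (par_list L2)).

Definition X_start (P1 P2 : P) := pc P1 (Cst cX) /\
  (pc P2 (Cst cY) \/ exists EL, List.Forall D_spawnable EL /\ pc P2 (Par (Cst cD) (par_list EL))).

Inductive bisim : P -> P -> Prop :=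
| bisim_pcong P Q : pc P Q -> bisim P Q
| bisim_X P Q : X_start P Q -> bisim P Q
| bisim_Y P Q : X_start Q P -> bisim P Q
| bisim_D P Q : phase cD D_lists P Q -> bisim P Q
| bisim_C P Q : phase cC C_lists P Q -> bisim P Q
| bisim_I P Q : phase cI I_lists P Q -> bisim P Q
| bisim_S P Q : phase cS S_lists P Q -> bisim P Q
| bisim_C' P Q : phase cC' C'_lists P Q -> bisim P Q.

Lemma phase_sym c R : (forall L1 L2, R L1 L2 -> R L2 L1) ->
  forall P1 P2, phase c R P1 P2 -> phase c R P2 P1.
Proof. by move=> H P1 P2 [L1 [L2 [H1 [H2 H3]]]]; exists L2, L1; split; auto. Qed.

Lemma phase_pcongr c R P Q Q' : phase c R P Q -> pc Q Q' -> phase c R P Q'.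
Proof. by move=> [L1 [L2 [H1 [H2 H3]]]] H; exists L1, L2; do 2 split=> //;
  exact: pc_trans (pc_sym H) H3. Qed.

Lemma Forall2_sym (R : P -> P -> Prop) s1 s2 :
  (forall x y, R x y -> R y x) -> List.Forall2 R s1 s2 -> List.Forall2 R s2 s1.
Proof. by move=> H; elim=> {s1 s2}; constructor; auto. Qed.

Lemma D_lists_sym L1 L2 : D_lists L1 L2 -> D_lists L2 L1.
Proof. by move=> [G [B1 [B2 [E1 [E2 [H1 [H2 [H3 [H4 [H5 [H6 H7]]]]]]]]]]]; exists G, B2, B1,
  E2, E1. Qed.

Lemma C_lists_sym L1 L2 : C_lists L1 L2 -> C_lists L2 L1.
Proof.
move=> [H1 [H2 [A1 [A2 [K1 [K2 [K3 [K4 K5]]]]]]]]; exists H2, H1, A2, A1; do 3 split=> //.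
apply: Forall2_sym K3 => x y [->|[y1 [y2 [E1 [E2 [E3 E4]]]]]]; first by left.
by right; exists y2, y1.
Qed.

Lemma same_trace_sym T (F : seq C -> seq T) t t' : same_trace F t t' -> same_trace F t' t.
Proof.
case=> [->|[w [w' [H1 [H2 [H3 H4]]]]]]; first by left.
by right; exists w', w; do 3 (split=> //); case: H4 => [[-> ->]|[[-> ->]|[-> ->]]]; auto.
Qed.

Lemma C'_lists_sym L1 L2 : C'_lists L1 L2 -> C'_lists L2 L1.
Proof. by move=> [H [S1 [S2 [H1 [H2 [H3 H4]]]]]]; exists H, S2, S1. Qed.

Lemma bisim_sym P Q : bisim P Q -> bisim Q P.
Proof.
case=> {}P {}Q H.
- by apply: bisim_pcong; exact: pc_sym.
- exact: bisim_Y.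
- exact: bisim_X.
- by apply: bisim_D; move: H; apply: phase_sym; exact: D_lists_sym.
- by apply: bisim_C; move: H; apply: phase_sym; exact: C_lists_sym.
- by apply: bisim_I; move: H; apply: phase_sym => L1 L2; apply: Forall2_sym; exact: same_trace_sym.
- by apply: bisim_S; move: H; apply: phase_sym => L1 L2; apply: Forall2_sym; exact: same_trace_sym.
- by apply: bisim_C'; move: H; apply: phase_sym; exact: C'_lists_sym.
Qed.

Lemma bisim_pcongr P Q Q' : bisim P Q -> pc Q Q' -> bisim P Q'.
Proof.
case=> {}P {}Q H HQ.
- exact: bisim_pcong (pc_trans H HQ).
- case: H => H1 H2; apply: bisim_X; split=> //.
  by case: H2 => [H2|[EL [H2 H3]]]; [left|right; exists EL; split=> //];
    exact: pc_trans (pc_sym HQ) _.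
- by case: H => H1 H2; apply: bisim_Y; split=> //; exact: pc_trans (pc_sym HQ) H1.
- exact: bisim_D (phase_pcongr H HQ).
- exact: bisim_C (phase_pcongr H HQ).
- exact: bisim_I (phase_pcongr H HQ).
- exact: bisim_S (phase_pcongr H HQ).
- exact: bisim_C' (phase_pcongr H HQ).
Qed.

Local Notation answers := (answers Delta tau bisim).
Local Notation answers_silent := (answers_silent bisim_pcongr).

(** * Answering every move *)

Lemma answers_pcong P1 Q l P' : pc P1 Q -> step Delta P1 l P' -> answers P1 Q l P'.
Proof.
move=> H Hs; apply: (@answers_silent _ _ _ _ Q P').
- exact: pcong_silent.
- apply: step_trans; exact: step_pcong H (pc_refl _) Hs.
- exact: bisim_pcong.
- exact: bisim_pcong.
Qed.

Lemma bisim_C'_of P Q L L' H S S' :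
  Permutation L (H ++ S) -> Permutation L' (H ++ S') ->
  List.Forall C'_spawnable S -> List.Forall C'_spawnable S' ->
  pc P (Par (Cst cC') (par_list L)) -> pc Q (Par (Cst cC') (par_list L')) -> bisim P Q.
Proof. by move=> *; apply: bisim_C'; exists L, L'; split; [exists H, S, S'|split]. Qed.

Section PhaseC'.
Variables (L1 H S1 S2 : seq P) (P1 Q : P).
Hypotheses (L1E : Permutation L1 (H ++ S1))
  (S1_spawnable : List.Forall C'_spawnable S1) (S2_spawnable : List.Forall C'_spawnable S2)
  (P1E : pc P1 (Par (Cst cC') (par_list L1))) (QE : pc Q (Par (Cst cC') (par_list (H ++ S2)))).

Lemma answers_C'_ctrl l p P' : Delta cC' l p -> pc P' (Par p (par_list L1)) ->
  answers P1 Q l P'.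
Proof.
move=> Hr Hp; inversion Hr; subst.
- apply: answers_stay; apply: (bisim_C'_of (L := Cst cG' :: L1) (S := Cst cG' :: S1) (S' := S2)
    _ (Permutation_refl _)) => //.
  + exact: Permutation_trans (perm_skip _ L1E) (Permutation_middle _ _ _).
  + constructor=> //; split=> //.
    by apply: silent_spawn; [exact: r_C'_t|exact: pcong_silent (pc_seq_epsr _)].
  + exact: pc_trans Hp (pc_parA _ _ _).
  + exact: QE.
- apply: (@answers_silent _ _ _ _ (Par (Cst cC') (par_list (S1 ++ H)))
             (Par Eps (par_list (S1 ++ H)))).
  + apply: silent_pcong (pc_sym QE) (pc_refl _) _.
    apply: silent_trans (silent_produce (S := S1) _ _) _.
      by apply: List.Forall_impl S1_spawnable => x [].
    rewrite catA; apply: silent_trans (pcong_silent (pc_par (pc_refl _)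
      (perm_par_list (Permutation_catC _ S2)))) _.
    by apply: silent_vanish; apply: List.Forall_impl S2_spawnable => x [_ /passive_vanishes].
  + by apply: trans_ctrl; exact: r_C'_e.
  + by apply: (bisim_C'_of (L' := S1 ++ H) (S' := S1) L1E) => //; exact: Permutation_catC.
  + apply: bisim_pcong; apply: pc_trans Hp (pc_par (pc_refl _) _).
    exact: perm_par_list (Permutation_trans L1E (Permutation_catC _ _)).
Qed.

Lemma answers_C'_comp s1 t s2 t' l P' : L1 = s1 ++ t :: s2 -> trans t l t' ->
  pc P' (Par (Cst cC') (par_list (s1 ++ t' :: s2))) -> answers P1 Q l P'.
Proof.
move=> E Ht Hp; have HL : Permutation (s1 ++ t :: s2) (H ++ S1) by rewrite -E.
case: (in_cat_split (Permutation_mid_In HL)) => [[H1 [H2 EH]]|[S11 [S12 ES]]].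
- apply: (@answers_silent _ _ _ _ (Par (Cst cC') (par_list (H1 ++ t :: H2 ++ S2)))
               (Par (Cst cC') (par_list (H1 ++ t' :: H2 ++ S2)))).
  + by apply: pcong_silent; have -> : H1 ++ t :: H2 ++ S2 = H ++ S2 by rewrite EH -catA.
  + exact: trans_comp.
  + apply: (bisim_C'_of (L := L1) (L' := H1 ++ t :: H2 ++ S2) (H := H1 ++ t :: H2) (S := S1)
      (S' := S2)) => //.
    * by rewrite -EH.
    * by rewrite -catA.
  + apply: (bisim_C'_of (L := s1 ++ t' :: s2) (L' := H1 ++ t' :: H2 ++ S2)
      (H := H1 ++ t' :: H2) (S := S1) (S' := S2)) => //.
    * by move: HL; rewrite EH -!catA; exact: Permutation_replace.
    * by rewrite -catA.
- have [[Ht_spawn Ht_passive] S1_rest] : C'_spawnable t /\ List.Forall C'_spawnable (S11 ++ S12).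
    by apply: Forall_mid; rewrite -ES.
  apply: (@answers_silent _ _ _ _ (Par (Cst cC') (par_list ([::] ++ t :: H ++ S2)))
               (Par (Cst cC') (par_list ([::] ++ t' :: H ++ S2)))).
  + by apply: silent_pcong (pc_sym QE) (pc_refl _) _; apply: (silent_produce (S := [:: t]));
      constructor.
  + exact: trans_comp.
  + apply: (bisim_C'_of (L' := t :: H ++ S2) (S := S1) (S' := t :: S2) L1E) => //;
      last by constructor.
    exact: Permutation_middle.
  + apply: (bisim_C'_of (L := s1 ++ t' :: s2) (L' := t' :: H ++ S2) (H := t' :: H)
      (S := S11 ++ S12) (S' := S2)) => //.
    move: HL; rewrite ES catA => /(Permutation_replace t'); rewrite -catA => HL'.
    by apply: Permutation_trans HL' _; apply: Permutation_sym; rewrite /= !catA;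
      exact: Permutation_middle.
Qed.

End PhaseC'.

Lemma answers_C' P1 Q l P' : phase cC' C'_lists P1 Q -> step Delta P1 l P' -> answers P1 Q l P'.
Proof.
move=> [L1 [L2 [[H [S1 [S2 [K1 [K2 [K3 K4]]]]]] [HP HQ]]]] Hs.
have HQ' : pc Q (Par (Cst cC') (par_list (H ++ S2))).
  exact: pc_trans HQ (pc_par (pc_refl _) (perm_par_list K2)).
case: (step_ctrl_parP HP Hs) => [[p [Hr Hp]]|[s1 [t [s2 [t' [E [Ht Hp]]]]]]].
- by apply: answers_C'_ctrl Hp; eassumption.
- by apply: answers_C'_comp E Ht Hp; eassumption.
Qed.

Lemma letters_V x : letters (map cV x) = vcat x.
Proof. by elim: x => //= k x IH; rewrite letters_cons IH. Qed.
Lemma letters_U x : letters (map cU x) = ucat x.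
Proof. by elim: x => //= k x IH; rewrite letters_cons IH. Qed.
Lemma indices_V x : indices (map cV x) = x.
Proof. by elim: x => //= k x IH; rewrite indices_cons IH. Qed.
Lemma indices_U x : indices (map cU x) = x.
Proof. by elim: x => //= k x IH; rewrite indices_cons IH. Qed.
Lemma letters_cat w1 w2 : letters (w1 ++ w2) = letters w1 ++ letters w2.
Proof. by rewrite /letters map_cat flatten_cat. Qed.
Lemma indices_cat w1 w2 : indices (w1 ++ w2) = indices w1 ++ indices w2.
Proof. by rewrite /indices map_cat flatten_cat. Qed.
Lemma vcat_cat x y : vcat (x ++ y) = vcat x ++ vcat y.
Proof. by rewrite /vcat map_cat flatten_cat. Qed.

Lemma map_const_of_VU x r :
  map const_of (map (pair false) x ++ map (pair true) r) = map cV x ++ map cU r.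
Proof. by rewrite map_cat -!map_comp. Qed.

Lemma balanced_Gv_C t : balanced_Gv t -> balancedC t.
Proof.
case=> x [r [-> E]]; exists (map (pair false) x ++ map (pair true) r).
rewrite map_const_of_VU; split=> //.
by rewrite letters_cat indices_cat letters_V letters_U indices_V indices_U vcat_cat E.
Qed.

Lemma plain_VU x r : plain (map cV x ++ map cU r).
Proof. by apply/all_prop_cat; split; apply: all_prop_map. Qed.

Lemma plain_const_of y : plain (map const_of y).
Proof. by apply: all_prop_map => [[[] k]]. Qed.

Lemma D_spawnable_Gu : D_spawnable (Cst cGu).
Proof.
split=> //; apply: silent_spawn; [exact: r_D_t|apply: pcong_silent; exact: pc_seq_epsr].
Qed.

Lemma D_spawnable_plain x r : D_spawnable (thread (map cV x ++ map cU r)).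
Proof. split; [exact: D_spawns_plain|exact: plain_passive (plain_VU x r)]. Qed.

Lemma D_spawnable_Z x r : D_spawnable (thread (cZ :: map cV x ++ map cU r)).
Proof. split; [exact: D_spawns_Z|split=> //; exact: plain_passive (plain_VU x r)]. Qed.

Lemma Forall2_C_twins_refl l : List.Forall2 C_twins l l.
Proof. by elim: l => [|x l IH]; constructor => //; left. Qed.

Lemma Forall_D_spawnable_silent S :
  List.Forall D_spawnable S -> List.Forall (fun e => silent (Cst cD) (Par (Cst cD) e)) S.
Proof. by apply: List.Forall_impl => x []. Qed.

Lemma Forall_D_spawnable_vanishes S :
  List.Forall D_spawnable S -> List.Forall (fun e => silent e Eps) S.
Proof. by apply: List.Forall_impl => x [_ /passive_vanishes]. Qed.

Lemma bisim_D_of P Q L L' G B B' E E' :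
  Permutation L (G ++ B ++ E) -> Permutation L' (G ++ B' ++ E') ->
  List.Forall balanced_Gv B -> List.Forall balanced_Gv B' -> size B = size B' ->
  List.Forall D_spawnable E -> List.Forall D_spawnable E' ->
  pc P (Par (Cst cD) (par_list L)) -> pc Q (Par (Cst cD) (par_list L')) -> bisim P Q.
Proof. by move=> *; apply: bisim_D; exists L, L'; split; [exists G, B, B', E, E'|split]. Qed.

Section PhaseD.
Variables (L1 G B1 B2 E1 E2 : seq P) (P1 Q : P).
Hypotheses (L1E : Permutation L1 (G ++ B1 ++ E1))
  (B1_balanced : List.Forall balanced_Gv B1) (B2_balanced : List.Forall balanced_Gv B2)
  (B_size : size B1 = size B2)
  (E1_spawnable : List.Forall D_spawnable E1) (E2_spawnable : List.Forall D_spawnable E2)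
  (P1E : pc P1 (Par (Cst cD) (par_list L1))) (QE : pc Q (Par (Cst cD) (par_list (G ++ B2 ++ E2)))).

Lemma answers_D_ctrl l p P' : Delta cD l p -> pc P' (Par p (par_list L1)) -> answers P1 Q l P'.
Proof.
move=> Hr Hp; inversion Hr; subst.
- apply: answers_stay; apply: (bisim_D_of (L := Cst cGu :: L1) (L' := G ++ B2 ++ E2)
    (G := G) (B := B1) (B' := B2) (E := Cst cGu :: E1) (E' := E2)) => //.
  + by apply: Permutation_trans (perm_skip _ L1E) _; perm_solve.
  + by constructor=> //; exact: D_spawnable_Gu.
  + exact: pc_trans Hp (pc_parA _ _ _).
(* Q first spawns copies of E1 and lets E2 vanish; after lambda_D the balanced
   G_v-threads of both sides are absorbable. *)
- apply: (@answers_silent _ _ _ _ (Par (Cst cD) (par_list (G ++ B2 ++ E1)))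
              (Par (Cst cC) (par_list (G ++ B2 ++ E1)))).
  + apply: silent_pcong (pc_sym QE) (pc_refl _) _.
    apply: silent_trans (silent_produce (G ++ B2 ++ E2) (Forall_D_spawnable_silent E1_spawnable)) _.
    apply: silent_trans (pcong_silent (pc_par (pc_refl (Cst cD))
              (perm_par_list (s2 := E2 ++ G ++ B2 ++ E1) _))) _; first by perm_solve.
    exact: silent_vanish (G ++ B2 ++ E1) (Forall_D_spawnable_vanishes E2_spawnable).
  + by apply: trans_ctrl; exact: r_D_D.
  + by apply: (bisim_D_of (L := L1) (L' := G ++ B2 ++ E1) (G := G) (B := B1) (B' := B2)
      (E := E1) (E' := E1)).
  + apply: bisim_C; exists L1, (G ++ B2 ++ E1); split; last by split.
    exists (G ++ E1), (G ++ E1), B1, B2; split; first by apply: Permutation_trans L1E _; perm_solve.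
    split; first by perm_solve.
    split; first exact: Forall2_C_twins_refl.
    by split; [move: B1_balanced|move: B2_balanced];
      apply: List.Forall_impl => x /balanced_Gv_C; right.
Qed.

Lemma answers_D_common s1 t s2 t' l P' G1 G2 : L1 = s1 ++ t :: s2 -> G = G1 ++ t :: G2 ->
  trans t l t' -> pc P' (Par (Cst cD) (par_list (s1 ++ t' :: s2))) -> answers P1 Q l P'.
Proof.
move=> EL EG Ht Hp; have HL : Permutation (s1 ++ t :: s2) (G ++ B1 ++ E1) by rewrite -EL.
rewrite EG -catA in HL.
apply: (@answers_silent _ _ _ _ (Par (Cst cD) (par_list (G1 ++ t :: G2 ++ B2 ++ E2)))
           (Par (Cst cD) (par_list (G1 ++ t' :: G2 ++ B2 ++ E2)))).
- by apply: pcong_silent; rewrite -[_ :: G2 ++ _]/((t :: G2) ++ _) catA -EG.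
- exact: trans_comp.
- apply: (bisim_D_of (L := L1) (L' := G1 ++ t :: G2 ++ B2 ++ E2) (G := G1 ++ t :: G2) (B := B1)
    (B' := B2) (E := E1) (E' := E2)) => //.
  + by rewrite -catA EL.
  + by rewrite -catA.
- apply: (bisim_D_of (L := s1 ++ t' :: s2) (L' := G1 ++ t' :: G2 ++ B2 ++ E2)
    (G := G1 ++ t' :: G2) (B := B1) (B' := B2) (E := E1) (E' := E2)) => //.
  + by rewrite -catA; exact: Permutation_replace HL.
  + by rewrite -catA.
Qed.

Lemma answers_D_spawned s1 t s2 t' l P' E11 E12 : L1 = s1 ++ t :: s2 -> E1 = E11 ++ t :: E12 ->
  trans t l t' -> pc P' (Par (Cst cD) (par_list (s1 ++ t' :: s2))) -> answers P1 Q l P'.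
Proof.
move=> EL EE Ht Hp.
have [Ht_spawnable E1_rest] : D_spawnable t /\ List.Forall D_spawnable (E11 ++ E12).
  by apply: Forall_mid; rewrite -EE.
have HL : Permutation (s1 ++ t :: s2) ((G ++ B1 ++ E11) ++ t :: E12).
  by rewrite -EL; apply: Permutation_trans L1E _; rewrite EE; perm_solve.
apply: (@answers_silent _ _ _ _ (Par (Cst cD) (par_list ([::] ++ t :: G ++ B2 ++ E2)))
           (Par (Cst cD) (par_list ([::] ++ t' :: G ++ B2 ++ E2)))).
- apply: silent_pcong (pc_sym QE) (pc_refl _) _.
  by apply: (silent_produce (S := [:: t])); constructor=> //; case: Ht_spawnable.
- exact: trans_comp.
- apply: (bisim_D_of (L := L1) (L' := t :: G ++ B2 ++ E2) (G := G) (B := B1) (B' := B2)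
    (E := E1) (E' := t :: E2)) => //; last by constructor.
  by perm_solve.
- apply: (bisim_D_of (L := s1 ++ t' :: s2) (L' := t' :: G ++ B2 ++ E2) (G := t' :: G)
    (B := B1) (B' := B2) (E := E11 ++ E12) (E' := E2)) => //.
  by apply: Permutation_trans (Permutation_replace _ HL) _; perm_solve.
Qed.

(* A balanced G_v-thread that stops generating is matched by the first balanced
   G_v-thread of the other side: both turn into D-spawnable threads. *)
Lemma answers_D_balanced_stop s1 s2 B11 B12 x r l pre P' :
  let t := thread (cGv :: map cV x ++ map cU r) in
  L1 = s1 ++ t :: s2 -> B1 = B11 ++ t :: B12 ->
  (forall w, trans (thread (cGv :: w)) l (thread (pre ++ w))) ->
  (forall x r, D_spawnable (thread (pre ++ map cV x ++ map cU r))) ->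
  pc P' (Par (Cst cD) (par_list (s1 ++ thread (pre ++ map cV x ++ map cU r) :: s2))) ->
  answers P1 Q l P'.
Proof.
move=> t EL EB Hl Hsp Hp.
have HL : Permutation (s1 ++ t :: s2) ((G ++ B11) ++ t :: (B12 ++ E1)).
  by rewrite -EL; apply: Permutation_trans L1E _; rewrite EB; perm_solve.
case EB2: B2 => [|b B2'].
  by have := B_size; rewrite EB EB2 size_cat /= addnS.
have [[x2 [r2 [Eb _]]] B2'_balanced] : balanced_Gv b /\ List.Forall balanced_Gv B2'.
  by apply/List.Forall_cons_iff; rewrite -EB2.
have QE' : pc Q (Par (Cst cD) (par_list (G ++ b :: B2' ++ E2))) by move: (QE); rewrite EB2.
set t1 := thread (pre ++ map cV x ++ map cU r).
set b1 := thread (pre ++ map cV x2 ++ map cU r2).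
apply: (@answers_silent _ _ _ _ (Par (Cst cD) (par_list (G ++ b :: B2' ++ E2)))
           (Par (Cst cD) (par_list (G ++ b1 :: B2' ++ E2)))).
- exact: pcong_silent QE'.
- by apply: trans_comp; rewrite Eb.
- apply: (bisim_D_of (L := L1) (L' := G ++ b :: B2' ++ E2) (G := G) (B := B1) (B' := b :: B2')
    (E := E1) (E' := E2)) => //; by rewrite -EB2.
- apply: (bisim_D_of (L := s1 ++ t1 :: s2) (L' := G ++ b1 :: B2' ++ E2) (G := G)
    (B := B11 ++ B12) (B' := B2') (E := t1 :: E1) (E' := b1 :: E2)) => //.
  + by apply: Permutation_trans (Permutation_replace _ HL) _; perm_solve.
  + by perm_solve.
  + by have := B1_balanced; rewrite EB => /(@Forall_mid _ balanced_Gv) [].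
  + by have := B_size; rewrite EB EB2 size_cat /= addnS size_cat => -[].
  + by constructor=> //; exact: Hsp.
  + by constructor=> //; exact: Hsp.
Qed.

Lemma answers_D_balanced s1 s2 B11 B12 x r l t' P' :
  let t := thread (cGv :: map cV x ++ map cU r) in
  L1 = s1 ++ t :: s2 -> B1 = B11 ++ t :: B12 -> ucat r = vcat r ->
  trans t l t' -> pc P' (Par (Cst cD) (par_list (s1 ++ t' :: s2))) -> answers P1 Q l P'.
Proof.
move=> t EL EB Er /trans_Gv_threadP [[-> [k Hk]]|[[-> Hk]|[-> Hk]]] Hp.
- apply: answers_stay.
  have HL : Permutation (s1 ++ t :: s2) ((G ++ B11) ++ t :: (B12 ++ E1)).
    by rewrite -EL; apply: Permutation_trans L1E _; rewrite EB; perm_solve.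
  apply: (bisim_D_of (L := s1 ++ thread (cGv :: map cV (k :: x) ++ map cU r) :: s2)
    (L' := G ++ B2 ++ E2) (G := G) (B := B11 ++ thread (cGv :: map cV (k :: x) ++ map cU r) :: B12)
    (B' := B2) (E := E1) (E' := E2)) => //.
  + by apply: Permutation_trans (Permutation_replace _ HL) _; perm_solve.
  + have := B1_balanced; rewrite EB => /(@Forall_mid _ balanced_Gv) [_ /List.Forall_app [H1 H2]].
    by apply/List.Forall_app; split=> //; constructor=> //; exists (k :: x), r.
  + by have := B_size; rewrite EB !size_cat.
  + exact: pc_trans Hp (pc_par (pc_refl _) (pcong_par_list_mid _ _ Hk)).
- apply: (answers_D_balanced_stop (pre := [::]) EL EB) => //.
  + by move=> w; apply: trans_head0; exact: r_Gv_e.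
  + exact: D_spawnable_plain.
  + exact: pc_trans Hp (pc_par (pc_refl _) (pcong_par_list_mid _ _ Hk)).
- apply: (answers_D_balanced_stop (pre := [:: cZ]) EL EB) => //.
  + by move=> w; apply: trans_head1; exact: r_Gv_V.
  + exact: D_spawnable_Z.
  + exact: pc_trans Hp (pc_par (pc_refl _) (pcong_par_list_mid _ _ Hk)).
Qed.

End PhaseD.

Lemma answers_D P1 Q l P' : phase cD D_lists P1 Q -> step Delta P1 l P' -> answers P1 Q l P'.
Proof.
move=> [L1 [L2 [[G [B1 [B2 [E1 [E2 [K1 [K2 [K3 [K4 [K5 [K6 K7]]]]]]]]]]] [HP HQ]]]] Hs.
have HQ' : pc Q (Par (Cst cD) (par_list (G ++ B2 ++ E2))).
  exact: pc_trans HQ (pc_par (pc_refl _) (perm_par_list K2)).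
case: (step_ctrl_parP HP Hs) => [[p [Hr Hp]]|[s1 [t [s2 [t' [E [Ht Hp]]]]]]].
  by apply: answers_D_ctrl Hp; eassumption.
have HL : Permutation (s1 ++ t :: s2) (G ++ B1 ++ E1) by rewrite -E.
case: (in_cat3_split (Permutation_mid_In HL)) => [[G1 [G2 EG]]|[[B11 [B12 EB]]|[E11 [E12 EE]]]].
- by apply: answers_D_common E EG Ht Hp; eassumption.
- have [[x [r [Et Er]]] _] : balanced_Gv t /\ List.Forall balanced_Gv (B11 ++ B12).
    by apply: Forall_mid; rewrite -EB.
  move: E EB Ht; rewrite Et => E EB Ht.
  by apply: answers_D_balanced E EB Er Ht Hp; eassumption.
- by apply: answers_D_spawned E EE Ht Hp; eassumption.
Qed.

Lemma map_const_of_V K : map const_of (map (pair false) K) = map cV K.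
Proof. by rewrite -map_comp. Qed.

Lemma absorbable_passive t : absorbable t -> passive t.
Proof. by case=> [[_ H]|[y [-> _]]] //; split=> //; exact: plain_passive (plain_const_of y). Qed.

Lemma Forall_absorbable_vanishes S :
  List.Forall absorbable S -> List.Forall (fun e => silent e Eps) S.
Proof. by apply: List.Forall_impl => x /absorbable_passive/passive_vanishes. Qed.

Lemma C_spawnable_plain y : C_spawnable (thread (map const_of y)).
Proof. by split; [exact: C_spawns_plain|exact: plain_passive (plain_const_of y)]. Qed.

Lemma balancedC_V K : balancedC (thread (cGv :: map cV K)).
Proof. by exists (map (pair false) K); rewrite map_const_of_V letters_V indices_V. Qed.

Definition same_traces (t t' : P) := same_trace letters t t' /\ same_trace indices t t'.

Lemma C_twins_same_traces t t' : C_twins t t' -> same_traces t t'.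
Proof.
case=> [->|[y [y' [-> [-> [E1 E2]]]]]]; first by split; left.
by split; right; exists (map const_of y), (map const_of y');
  do 3 (split=> //; try exact: plain_const_of); right; right.
Qed.

Lemma absorbable_twins A : List.Forall absorbable A -> exists A',
  List.Forall2 same_traces A A' /\
  List.Forall (fun e => silent (Cst cC) (Par (Cst cC) e)) A' /\ List.Forall absorbable A'.
Proof.
elim: A => [|t A IH] HA; first by exists [::].
case/List.Forall_cons_iff: HA => Ht /IH [A' [K1 [K2 K3]]].
case: Ht => [Ht|[y [-> Ey]]].
- exists (t :: A'); split; first by constructor=> //; split; left.
  by split; constructor=> //; [case: Ht|left].
- set K := indices (map const_of y).
  exists (thread (cGv :: map cV K) :: A'); split; last by split; constructor=> //;
    [exact: C_spawns_Gv|right; exact: balancedC_V].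
  constructor=> //; split; right; exists (map const_of y), (map cV K);
    (split; [exact: plain_const_of|]); (split; [exact: all_prop_map|]); split;
    try (by right; left); [by rewrite letters_V|by rewrite indices_V].
Qed.

Lemma bisim_C_of P Q L L' H H' A A' :
  Permutation L (H ++ A) -> Permutation L' (H' ++ A') -> List.Forall2 C_twins H H' ->
  List.Forall absorbable A -> List.Forall absorbable A' ->
  pc P (Par (Cst cC) (par_list L)) -> pc Q (Par (Cst cC) (par_list L')) -> bisim P Q.
Proof. by move=> *; apply: bisim_C; exists L, L'; split; [exists H, H', A, A'|split]. Qed.

Section PhaseC.
Variables (L1 H1 H2 A1 A2 : seq P) (P1 Q : P).
Hypotheses (L1E : Permutation L1 (H1 ++ A1)) (H_twins : List.Forall2 C_twins H1 H2)
  (A1_absorbable : List.Forall absorbable A1) (A2_absorbable : List.Forall absorbable A2)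
  (P1E : pc P1 (Par (Cst cC) (par_list L1))) (QE : pc Q (Par (Cst cC) (par_list (H2 ++ A2)))).

(* Before the switch, C replaces the absorbable threads of Q by twins of those of
   P1, so that afterwards the threads are pairwise equal or twins. *)
Lemma answers_C_switch c' l P' : c' = cI \/ c' = cS -> Delta cC l (Cst c') ->
  pc P' (Par (Cst c') (par_list L1)) -> answers P1 Q l P'.
Proof.
move=> Hc Hr Hp.
case: (absorbable_twins A1_absorbable) => A1' [A_twins [A1'_spawn A1'_absorbable]].
have [HL HK] := Forall2_and_inv
  (List.Forall2_app (List.Forall2_impl _ C_twins_same_traces H_twins) A_twins).
apply: (@answers_silent _ _ _ _ (Par (Cst cC) (par_list (H2 ++ A1')))
           (Par (Cst c') (par_list (H2 ++ A1')))).
- apply: silent_pcong (pc_sym QE) (pc_refl _) _.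
  apply: silent_trans (silent_produce (H2 ++ A2) A1'_spawn) _.
  apply: silent_trans (pcong_silent (pc_par (pc_refl (Cst cC))
              (perm_par_list (s2 := A2 ++ H2 ++ A1') _))) _; first by perm_solve.
  exact: silent_vanish (H2 ++ A1') (Forall_absorbable_vanishes A2_absorbable).
- exact: trans_ctrl.
- exact: (bisim_C_of (L' := H2 ++ A1') (H := H1) (H' := H2) (A := A1) (A' := A1') L1E).
- have HP' : pc P' (Par (Cst c') (par_list (H1 ++ A1))).
    exact: pc_trans Hp (pc_par (pc_refl _) (perm_par_list L1E)).
  by case: Hc => ?; subst c'; [apply: bisim_I|apply: bisim_S]; exists (H1 ++ A1), (H2 ++ A1').
Qed.

Lemma answers_C_ctrl l p P' : Delta cC l p -> pc P' (Par p (par_list L1)) -> answers P1 Q l P'.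
Proof.
move=> Hr Hp; inversion Hr; subst.
- by apply: answers_C_switch Hr Hp; left.
- by apply: answers_C_switch Hr Hp; right.
- apply: (@answers_silent _ _ _ _ (Par (Cst cC) (par_list (H2 ++ A2)))
             (Par (Par (Cst cC) (Cst cG)) (par_list (H2 ++ A2)))).
  + exact: pcong_silent QE.
  + by apply: trans_ctrl; exact: r_C_G.
  + exact: (bisim_C_of (L' := H2 ++ A2) (H := H1) (H' := H2) (A := A1) (A' := A2) L1E).
  + apply: (bisim_C_of (L := Cst cG :: L1) (L' := Cst cG :: H2 ++ A2) (H := Cst cG :: H1)
      (H' := Cst cG :: H2) (A := A1) (A' := A2)) => //.
    * exact: perm_skip.
    * by constructor=> //; left.
    * exact: pc_trans Hp (pc_parA _ _ _).
- apply: answers_stay; apply: (bisim_C_of (L := thread [:: cGv] :: L1) (L' := H2 ++ A2)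
    (H := H1) (H' := H2) (A := thread [:: cGv] :: A1) (A' := A2)) => //.
  + by apply: Permutation_trans (perm_skip _ L1E) _; perm_solve.
  + by constructor=> //; right; exists [::].
  + apply: pc_trans Hp (pc_trans (pc_parA _ _ _) (pc_par (pc_refl _) (pc_par _ (pc_refl _)))).
    exact: pc_sym (pc_seq_epsr _).
Qed.

Lemma answers_C_twin s1 t s2 t' l P' Ha Hb : L1 = s1 ++ t :: s2 -> H1 = Ha ++ t :: Hb ->
  trans t l t' -> pc P' (Par (Cst cC) (par_list (s1 ++ t' :: s2))) -> answers P1 Q l P'.
Proof.
move=> EL EH Ht Hp.
have HL : Permutation (s1 ++ t :: s2) (Ha ++ t :: Hb ++ A1).
  by rewrite -EL -[_ :: Hb ++ A1]/((t :: Hb) ++ A1) catA -EH.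
have [Ha' [t2 [Hb' [EH2 [Ma [Mt Mb]]]]]] : exists Ha' t2 Hb', H2 = Ha' ++ t2 :: Hb' /\
    List.Forall2 C_twins Ha Ha' /\ C_twins t t2 /\ List.Forall2 C_twins Hb Hb'.
  by apply: Forall2_mid_inv; rewrite -EH.
have QE' : pc Q (Par (Cst cC) (par_list (Ha' ++ t2 :: Hb' ++ A2))).
  by rewrite -[_ :: Hb' ++ A2]/((t2 :: Hb') ++ A2) catA -EH2.
case: Mt => [Et2|[y [y2 [Et [Et2 [Ey Ky]]]]]].
- rewrite -Et2 in QE' *.
  apply: (@answers_silent _ _ _ _ (Par (Cst cC) (par_list (Ha' ++ t :: Hb' ++ A2)))
             (Par (Cst cC) (par_list (Ha' ++ t' :: Hb' ++ A2)))).
  + exact: pcong_silent QE'.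
  + exact: trans_comp.
  + apply: (bisim_C_of (L := L1) (L' := Ha' ++ t :: Hb' ++ A2) (H := Ha ++ t :: Hb)
      (H' := Ha' ++ t :: Hb') (A := A1) (A' := A2)) => //; rewrite ?EL -?catA //.
    by apply: Forall2_mid => //; left.
  + apply: (bisim_C_of (L := s1 ++ t' :: s2) (L' := Ha' ++ t' :: Hb' ++ A2) (H := Ha ++ t' :: Hb)
      (H' := Ha' ++ t' :: Hb') (A := A1) (A' := A2)) => //.
    * by rewrite -catA; exact: Permutation_replace HL.
    * by rewrite -catA.
    * by apply: Forall2_mid => //; left.
- subst t t2; case: (trans_Z_threadP Ht) => Hl Ht'.
  apply: (@answers_silent _ _ _ _ (Par (Cst cC) (par_list (Ha' ++ thread (cZ :: map const_of
    y2) :: Hb' ++ A2)))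
             (Par (Cst cC) (par_list (Ha' ++ thread (map const_of y2) :: Hb' ++ A2)))).
  + exact: pcong_silent QE'.
  + by apply: trans_comp; case: Hl => ->; apply: trans_head0; [exact: r_Z_t|exact: r_Z_Z].
  + apply: (bisim_C_of (L := L1) (L' := Ha' ++ thread (cZ :: map const_of y2) :: Hb' ++ A2)
      (H := Ha ++ thread (cZ :: map const_of y) :: Hb)
      (H' := Ha' ++ thread (cZ :: map const_of y2) :: Hb') (A := A1) (A' := A2)) => //;
        rewrite ?EL -?catA //.
    by apply: Forall2_mid => //; right; exists y, y2.
  + apply: (bisim_C_of (L := s1 ++ thread (map const_of y) :: s2)
      (L' := Ha' ++ thread (map const_of y2) :: Hb' ++ A2) (H := Ha ++ Hb) (H' := Ha' ++ Hb')
      (A := thread (map const_of y) :: A1) (A' := thread (map const_of y2) :: A2)) => //.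
    * by apply: Permutation_trans (Permutation_replace _ HL) _; perm_solve.
    * by perm_solve.
    * exact: List.Forall2_app.
    * by constructor=> //; left; exact: C_spawnable_plain.
    * by constructor=> //; left; exact: C_spawnable_plain.
    * exact: pc_trans Hp (pc_par (pc_refl _) (pcong_par_list_mid _ _ Ht')).
Qed.

Lemma answers_C_absorbable s1 t s2 t' l P' A11 A12 : L1 = s1 ++ t :: s2 -> A1 = A11 ++ t :: A12 ->
  trans t l t' -> pc P' (Par (Cst cC) (par_list (s1 ++ t' :: s2))) -> answers P1 Q l P'.
Proof.
move=> EL EA Ht Hp.
have [Ht_absorbable A1_rest] : absorbable t /\ List.Forall absorbable (A11 ++ A12).
  by apply: Forall_mid; rewrite -EA.
have HL : Permutation (s1 ++ t :: s2) ((H1 ++ A11) ++ t :: A12).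
  by rewrite -EL; apply: Permutation_trans L1E _; rewrite EA; perm_solve.
have stay t'' : absorbable t'' -> pc t' t'' -> answers P1 Q l P' -> answers P1 Q l P'.
  by [].
case: Ht_absorbable => [Ht_spawn|[y [Et Ey]]].
- apply: (@answers_silent _ _ _ _ (Par (Cst cC) (par_list ([::] ++ t :: H2 ++ A2)))
             (Par (Cst cC) (par_list ([::] ++ t' :: H2 ++ A2)))).
  + apply: silent_pcong (pc_sym QE) (pc_refl _) _.
    by apply: (silent_produce (S := [:: t])); constructor=> //; case: Ht_spawn.
  + exact: trans_comp.
  + apply: (bisim_C_of (L := L1) (L' := t :: H2 ++ A2) (H := H1) (H' := H2) (A := A1)
      (A' := t :: A2)) => //; first by perm_solve.
    by constructor=> //; left.
  + apply: (bisim_C_of (L := s1 ++ t' :: s2) (L' := t' :: H2 ++ A2) (H := t' :: H1)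
      (H' := t' :: H2) (A := A11 ++ A12) (A' := A2)) => //.
    * by apply: Permutation_trans (Permutation_replace _ HL) _; perm_solve.
    * by constructor=> //; left.
- subst t; case: (trans_Gv_threadP Ht) => [[-> [k Hk]]|[[-> Hk]|[-> Hk]]].
  1,2: apply: answers_stay.
  + apply: (bisim_C_of (L := s1 ++ thread (cGv :: map const_of ((false, k) :: y)) :: s2)
      (L' := H2 ++ A2) (H := H1) (H' := H2)
      (A := A11 ++ thread (cGv :: map const_of ((false, k) :: y)) :: A12) (A' := A2)) => //.
    * by apply: Permutation_trans (Permutation_replace _ HL) _; perm_solve.
    * apply/List.Forall_app; case/List.Forall_app: A1_rest => M1 M2; split=> //.
      constructor=> //; right; exists ((false, k) :: y); split=> //.
      by rewrite /= letters_cons indices_cons Ey.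
    * exact: pc_trans Hp (pc_par (pc_refl _) (pcong_par_list_mid _ _ Hk)).
  + apply: (bisim_C_of (L := s1 ++ thread (map const_of y) :: s2) (L' := H2 ++ A2) (H := H1)
      (H' := H2) (A := A11 ++ thread (map const_of y) :: A12) (A' := A2)) => //.
    * by apply: Permutation_trans (Permutation_replace _ HL) _; perm_solve.
    * apply/List.Forall_app; case/List.Forall_app: A1_rest => M1 M2; split=> //.
      by constructor=> //; left; exact: C_spawnable_plain.
    * exact: pc_trans Hp (pc_par (pc_refl _) (pcong_par_list_mid _ _ Hk)).
  (* Q answers lambda_V with a G_v-thread of its own that generates the index
     sequence of the moving thread using V's only. *)
  + set K := indices (map const_of y).
    apply: (@answers_silent _ _ _ _
             (Par (Cst cC) (par_list ([::] ++ thread (cGv :: map cV K) :: H2 ++ A2)))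
             (Par (Cst cC) (par_list ([::] ++ thread (cZ :: map cV K) :: H2 ++ A2)))).
    * apply: silent_pcong (pc_sym QE) (pc_refl _) _.
      by apply: (silent_produce (S := [:: thread (cGv :: map cV K)])); constructor=> //;
        exact: C_spawns_Gv.
    * by apply: trans_comp; apply: trans_head1; exact: r_Gv_V.
    * apply: (bisim_C_of (L := L1) (L' := thread (cGv :: map cV K) :: H2 ++ A2) (H := H1)
        (H' := H2) (A := A1) (A' := thread (cGv :: map cV K) :: A2)) => //; first by perm_solve.
      by constructor=> //; right; exact: balancedC_V.
    * apply: (bisim_C_of (L := s1 ++ thread (cZ :: map const_of y) :: s2)
        (L' := thread (cZ :: map cV K) :: H2 ++ A2) (H := thread (cZ :: map const_of y) :: H1)
        (H' := thread (cZ :: map cV K) :: H2) (A := A11 ++ A12) (A' := A2)) => //.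
      - by apply: Permutation_trans (Permutation_replace _ HL) _; perm_solve.
      - constructor=> //; right; exists y, (map (pair false) K).
        by rewrite map_const_of_V letters_V indices_V.
      - exact: pc_trans Hp (pc_par (pc_refl _) (pcong_par_list_mid _ _ Hk)).
Qed.

End PhaseC.

Lemma trace_twins_C'_spawnable T (F : seq C -> seq T) t t' : trace_twins F t t'
  -> C'_spawnable t /\ C'_spawnable t'.
Proof.
case=> w [w' [H1 [H2 [_ H]]]].
case: H => [[-> ->]|[[-> ->]|[-> ->]]]; split; split.
- exact: C'_spawns_plain.
- exact: plain_passive.
- exact: C'_spawns_plain.
- exact: plain_passive.
- exact: C'_spawns_Gv.
- by split=> //; exact: plain_passive.
- exact: C'_spawns_Gv.
- by split=> //; exact: plain_passive.
- exact: C'_spawns_Z.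
- by split=> //; exact: plain_passive.
- exact: C'_spawns_Z.
- by split=> //; exact: plain_passive.
Qed.

Lemma same_trace_C'_lists T (F : seq C -> seq T) L1 L2 : List.Forall2 (same_trace F) L1 L2
  -> C'_lists L1 L2.
Proof.
elim => {L1 L2} [|t t' L1 L2 Ht _ [H [S1 [S2 [K1 [K2 [K3 K4]]]]]]].
- by exists [::], [::], [::].
- case: Ht => [<-|Hs].
  + exists (t :: H), S1, S2; split; first exact: perm_skip.
    by split; [exact: perm_skip|split].
  + case: (trace_twins_C'_spawnable Hs) => Ht Ht'.
    exists H, (t :: S1), (t' :: S2); split.
      by apply: Permutation_trans (perm_skip _ K1) _; perm_solve.
    split; first by apply: Permutation_trans (perm_skip _ K2) _; perm_solve.
    by split; constructor.
Qed.

Lemma answers_C P1 Q l P' : phase cC C_lists P1 Q -> step Delta P1 l P' -> answers P1 Q l P'.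
Proof.
move=> [L1 [L2 [[H1 [H2 [A1 [A2 [K1 [K2 [K3 [K4 K5]]]]]]]] [HP HQ]]]] Hs.
have HQ' : pc Q (Par (Cst cC) (par_list (H2 ++ A2))).
  exact: pc_trans HQ (pc_par (pc_refl _) (perm_par_list K2)).
case: (step_ctrl_parP HP Hs) => [[p [Hr Hp]]|[s1 [t [s2 [t' [E [Ht Hp]]]]]]].
  by apply: answers_C_ctrl Hp; eassumption.
have HL : Permutation (s1 ++ t :: s2) (H1 ++ A1) by rewrite -E.
case: (in_cat_split (Permutation_mid_In HL)) => [[Ha [Hb EH]]|[A11 [A12 EA]]].
- by apply: answers_C_twin E EH Ht Hp; eassumption.
- by apply: answers_C_absorbable E EA Ht Hp; eassumption.
Qed.

Section PhaseTrace.
Variables (T : Type) (F : seq C -> seq T) (ctrl : C) (lam : gact Sigma n)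
  (free : gact Sigma n -> Prop) (obs : T -> gact Sigma n).
Hypotheses (F_cons : forall c w, F (c :: w) = F [:: c] ++ F w)
  (ctrl_rules : forall l p, Delta ctrl l p -> (free l /\ p = Cst ctrl) \/ (l = lam /\ p = Cst cC'))
  (ctrl_free : forall l, free l -> Delta ctrl l (Cst ctrl))
  (ctrl_switch : Delta ctrl lam (Cst cC'))
  (trans_plain : forall w l r, plain w -> trans (thread w) l r ->
    exists w2, pc r (thread w2) /\ plain w2 /\
    ((F w2 = F w /\ (l = tau \/ free l)) \/ (exists a, F w = a :: F w2 /\ (l = tau \/ l = obs a))))
  (plain_move : forall w a rho x, plain w -> F w = a :: rho -> (x = tau \/ x = obs a) ->
    exists w1 w2, silent (thread w) (thread w1) /\ trans (thread w1) x (thread w2) /\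
      plain w1 /\ plain w2 /\ F w1 = F w /\ F w2 = rho)
  (bisim_phase : forall P Q, phase ctrl (List.Forall2 (same_trace F)) P Q -> bisim P Q).

Lemma answers_trace_ctrl L1 L2 P1 Q l p P' : List.Forall2 (same_trace F) L1 L2 ->
  pc P1 (Par (Cst ctrl) (par_list L1)) -> pc Q (Par (Cst ctrl) (par_list L2)) ->
  Delta ctrl l p -> pc P' (Par p (par_list L1)) -> answers P1 Q l P'.
Proof.
move=> HL HP HQ /ctrl_rules [[Hf ->]|[-> ->]] Hp.
- apply: (@answers_silent _ _ _ _ Q Q); first exact: pcong_silent.
  + apply/(trans_pcong Delta HQ); apply: trans_pcongr (trans_ctrl _ (ctrl_free Hf)) _.
    exact: pc_sym.
  + by apply: bisim_phase; exists L1, L2.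
  + by apply: bisim_phase; exists L1, L2.
- apply: (@answers_silent _ _ _ _ Q (Par (Cst cC') (par_list L2))); first exact: pcong_silent.
  + by apply/(trans_pcong Delta HQ); exact: trans_ctrl.
  + by apply: bisim_phase; exists L1, L2.
  + by apply: bisim_C'; exists L1, L2; split; [exact: same_trace_C'_lists HL|split].
Qed.

Section Component.
Variables (s1 s2 s1' s2' : seq P) (t t2 t' P1 Q P' : P) (l : gact Sigma n).
Hypotheses (Hs1 : List.Forall2 (same_trace F) s1 s1') (Hs2 : List.Forall2 (same_trace F) s2 s2')
  (P1E : pc P1 (Par (Cst ctrl) (par_list (s1 ++ t :: s2))))
  (QE : pc Q (Par (Cst ctrl) (par_list (s1' ++ t2 :: s2'))))
  (Htt2 : same_trace F t t2) (Ht : trans t l t')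
  (Hp : pc P' (Par (Cst ctrl) (par_list (s1 ++ t' :: s2)))).

Let bisim_after t'' t2'' : pc t' t'' -> same_trace F t'' t2'' ->
  bisim P' (Par (Cst ctrl) (par_list (s1' ++ t2'' :: s2'))).
Proof.
move=> H1 H2; apply: bisim_phase; exists (s1 ++ t'' :: s2), (s1' ++ t2'' :: s2').
split; first exact: Forall2_mid.
by split=> //; exact: pc_trans Hp (pc_par (pc_refl _) (pcong_par_list_mid _ _ H1)).
Qed.

Lemma answers_trace_mirror t2a t2' t'' : silent t2 t2a -> trans t2a l t2' -> pc t' t'' ->
  same_trace F t t2a -> same_trace F t'' t2' -> answers P1 Q l P'.
Proof.
move=> H1 H2 H3 H4 H5.
apply: (@answers_silent _ _ _ _ (Par (Cst ctrl) (par_list (s1' ++ t2a :: s2')))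
              (Par (Cst ctrl) (par_list (s1' ++ t2' :: s2')))).
- by apply: silent_pcong (pc_sym QE) (pc_refl _) _; exact: silent_comp.
- exact: trans_comp.
- by apply: bisim_phase; exists (s1 ++ t :: s2), (s1' ++ t2a :: s2'); split;
    [exact: Forall2_mid|split].
- exact: bisim_after H3 H5.
Qed.

Lemma answers_trace_idle t'' : pc t' t'' -> same_trace F t'' t2 -> l = tau \/ free l ->
  answers P1 Q l P'.
Proof.
move=> H1 H2 [->|Hf]; first by apply: answers_stay; apply: bisim_pcongr (pc_sym QE);
  exact: bisim_after H1 H2.
apply: (@answers_silent _ _ _ _ Q Q); first exact: pcong_silent.
- apply/(trans_pcong Delta QE); apply: trans_pcongr (trans_ctrl _ (ctrl_free Hf)) _.
  exact: pc_sym.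
- by apply: bisim_phase; exists (s1 ++ t :: s2), (s1' ++ t2 :: s2'); split;
    [exact: Forall2_mid|split].
- by apply: bisim_pcongr (pc_sym QE); exact: bisim_after H1 H2.
Qed.

Lemma answers_trace_plain w w' : plain w -> plain w' -> F w = F w' ->
  t = thread w -> t2 = thread w' -> answers P1 Q l P'.
Proof.
move=> Pw Pw' EF Et Et2; have Htw : trans (thread w) l t' by rewrite -Et.
case: (trans_plain Pw Htw) => w2 [Hw2 [Pw2 [[EF2 Hl]|[a [EFa Hl]]]]].
- apply: (answers_trace_idle Hw2) => //; rewrite Et2.
  by right; exists w2, w'; do 2 (split=> //); split; [rewrite EF2|left].
- rewrite EF in EFa; case: (plain_move Pw' EFa Hl) => w1 [w3 [H1 [H2 [H3 [H4 [H5 H6]]]]]].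
  apply: (answers_trace_mirror (t2a := thread w1) _ H2 Hw2); first by rewrite Et2.
  + by rewrite Et; right; exists w, w1; do 2 (split=> //); split; [rewrite H5|left].
  + by right; exists w2, w3; do 2 (split=> //); split; [rewrite H6|left].
Qed.

Lemma answers_trace_comp : answers P1 Q l P'.
Proof.
case: Htt2 => [Et2|[w [w' [Pw [Pw' [EF [[Et Et2]|[[Et Et2]|[Et Et2]]]]]]]]].
- apply: (answers_trace_mirror (t2a := t) _ Ht (pc_refl _)); try by left.
  by rewrite -Et2; exact: pcong_silent.
- exact: answers_trace_plain Pw Pw' EF Et Et2.
- have same_Gv z z' : F z = F z' -> plain z -> plain z' ->
      same_trace F (thread (cGv :: z)) (thread (cGv :: z')).
    by move=> *; right; exists z, z'; do 3 (split=> //); right; left.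
  have same_plain z z' pre : F z = F z' -> plain z -> plain z' -> pre = [::] \/ pre = [:: cZ] ->
      same_trace F (thread (pre ++ z)) (thread (pre ++ z')).
    by move=> Ez Pz Pz' [->|->]; right; exists z, z'; do 3 (split=> //); [left|right; right].
  move: (Ht); rewrite Et => /trans_Gv_threadP [[El [k Hk]]|[[El Hk]|[El Hk]]].
  + apply: (answers_trace_mirror (t2a := thread (cGv :: w')) _ _ Hk) => //;
      first by rewrite Et2; exact: pcong_silent.
    * by rewrite El; apply: trans_head2; exact: r_Gv_t.
    * by rewrite Et; exact: same_Gv.
    * by apply: (same_Gv (cV k :: w) (cV k :: w')) => //; rewrite F_cons EF -F_cons.
  + apply: (answers_trace_mirror (t2a := thread (cGv :: w')) _ _ Hk) => //;
      first by rewrite Et2; exact: pcong_silent.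
    * by rewrite El; apply: trans_head0; exact: r_Gv_e.
    * by rewrite Et; exact: same_Gv.
    * by apply: (same_plain _ _ [::]) => //; left.
  + apply: (answers_trace_mirror (t2a := thread (cGv :: w')) _ _ Hk) => //;
      first by rewrite Et2; exact: pcong_silent.
    * by rewrite El; apply: trans_head1; exact: r_Gv_V.
    * by rewrite Et; exact: same_Gv.
    * by apply: (same_plain _ _ [:: cZ]) => //; right.
- move: (Ht); rewrite Et => /trans_Z_threadP [Hl Hk].
  apply: (answers_trace_mirror (t2a := thread (cZ :: w')) _ _ Hk) => //; first by rewrite Et2;
    exact: pcong_silent.
  + by case: Hl => ->; apply: trans_head0; [exact: r_Z_t|exact: r_Z_Z].
  + by right; exists w, w'; do 3 (split=> //); right; right.
  + by right; exists w, w'; do 3 (split=> //); left.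
Qed.

End Component.

Lemma answers_trace P1 Q l P' : phase ctrl (List.Forall2 (same_trace F)) P1 Q ->
  step Delta P1 l P' -> answers P1 Q l P'.
Proof.
move=> [L1 [L2 [HL [HP HQ]]]] Hs.
case: (step_ctrl_parP HP Hs) => [[p [Hr Hp]]|[s1 [t [s2 [t' [E [Ht Hp]]]]]]].
  exact: answers_trace_ctrl HL HP HQ Hr Hp.
rewrite E in HL HP; case: (Forall2_mid_inv HL) => s1' [t2 [s2' [EL2 [M1 [M2 M3]]]]].
rewrite EL2 in HQ; exact: answers_trace_comp M1 M3 HP HQ M2 Ht Hp.
Qed.

End PhaseTrace.

Lemma pcong_D_nil : pc (Cst cD) (Par (Cst cD) (par_list [::])).
Proof. exact: pc_sym (pc_trans (pc_parC _ _) (pc_par_epsl _)). Qed.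

Lemma D_spawnable_Gu_U r : D_spawnable (thread (cGu :: map cU r)).
Proof. by split; [exact: D_spawns_Gu|split=> //; apply: plain_passive; exact: all_prop_map]. Qed.

Lemma silent_D_spawnables c EL : Delta c tau (Cst cD) -> List.Forall D_spawnable EL ->
  silent (Cst c) (Par (Cst cD) (par_list EL)).
Proof.
move=> Hc HEL; apply: silent_trans (trans_silent (p := Cst c) (q := Cst cD) _) _.
  by exists (Cst cD).
apply: silent_trans (pcong_silent pcong_D_nil) _.
by have := silent_produce [::] (Forall_D_spawnable_silent HEL); rewrite cats0.
Qed.

Lemma X_start_silent P Q : X_start P Q ->
  exists EL, List.Forall D_spawnable EL /\ silent Q (Par (Cst cD) (par_list EL)).
Proof.
case=> _ [HY|[EL [HEL HE]]]; last by exists EL; split=> //; exact: pcong_silent HE.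
exists [::]; split=> //; apply: silent_pcong (pc_sym HY) (pc_refl _) _.
by apply: silent_D_spawnables => //; exact: r_Y_t.
Qed.

(* Y answers lambda_U by spawning G_u U_{i_m} ... U_{i_2} and firing lambda_U, which
   leaves the G_v-thread G_v U_{i_1} ... U_{i_m}, balanced because i_1 ... i_m solves
   the instance. *)
Lemma answers_X_lamU k r P1 Q P' : ucat (k :: r) = vcat (k :: r) -> X_start P1 Q ->
  pc P' (Par (Cst cD) (Cst cGv)) -> answers P1 Q lamU P'.
Proof.
move=> Hsol HXQ Hp; have [HX _] := HXQ.
have [EL [HEL HQ]] := X_start_silent HXQ.
set Gu := thread (cGu :: map cU r); set Gv := thread (cGv :: map cU (k :: r)).
apply: (@answers_silent _ _ _ _ (Par (Cst cD) (par_list ([::] ++ Gu :: EL)))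
           (Par (Cst cD) (par_list ([::] ++ Gv :: EL)))).
- apply: silent_trans HQ _; apply: (silent_produce (S := [:: Gu])).
  by constructor=> //; exact: D_spawns_Gu.
- by apply: trans_comp; apply: trans_head2; exact: r_Gu_U.
- apply: bisim_X; split=> //; right; exists (Gu :: EL); split=> //.
  by constructor=> //; exact: D_spawnable_Gu_U.
- apply: (bisim_D_of (L := [:: thread [:: cGv]]) (L' := Gv :: EL) (G := [::])
    (B := [:: thread [:: cGv]]) (B' := [:: Gv]) (E := [::]) (E' := EL)) => //.
  + by constructor=> //; exists [::], [::].
  + by constructor=> //; exists [::], (k :: r).
  + apply: pc_trans Hp (pc_par (pc_refl _) _).
    exact: pc_trans (pc_sym (pc_seq_epsr _)) (pc_sym (pc_trans (pc_parC _ _) (pc_par_epsl _))).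
Qed.

Lemma answers_X k r P1 Q l P' : ucat (k :: r) = vcat (k :: r) ->
  X_start P1 Q -> step Delta P1 l P' -> answers P1 Q l P'.
Proof.
move=> Hsol HXQ; have [HX _] := HXQ.
move=> Hs; case: (step_trans (step_pcong HX (pc_refl _) Hs)) => p [Hr Hp].
inversion Hr; subst; first exact: answers_X_lamU Hsol HXQ (pc_sym Hp).
case: HXQ => _ [HY|[EL [HEL HE]]].
- apply: (@answers_silent _ _ _ _ (Cst cY) (Cst cD)); first exact: pcong_silent.
  + by exists (Cst cD); split=> //; exact: r_Y_t.
  + by apply: bisim_X; split=> //; left.
  + exact: bisim_pcong (pc_sym Hp).
- apply: answers_stay; apply: (bisim_D_of (L := [::]) (L' := EL) (G := [::]) (B := [::])
    (B' := [::]) (E := [::]) (E' := EL)) => //.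
  exact: pc_trans (pc_sym Hp) pcong_D_nil.
Qed.

Lemma answers_Y P1 Q l P' : X_start Q P1 -> step Delta P1 l P' -> answers P1 Q l P'.
Proof.
move=> [HX [HY|[EL [HEL HE]]]] Hs.
- case: (step_trans (step_pcong HY (pc_refl _) Hs)) => p [Hr Hp]; inversion Hr; subst.
  apply: (@answers_silent _ _ _ _ (Cst cX) (Cst cD)); first exact: pcong_silent.
  + by exists (Cst cD); split=> //; exact: r_X_t.
  + by apply: bisim_Y; split=> //; left.
  + exact: bisim_pcong (pc_sym Hp).
- apply: (@answers_silent _ _ _ _ P1 P'); last 2 first.
  + exact: bisim_pcong.
  + exact: bisim_pcong.
  + apply: silent_pcong (pc_sym HX) (pc_sym HE) _.
    by apply: silent_D_spawnables => //; exact: r_X_t.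
  + exact: step_trans.
Qed.

Lemma answers_I (Hu : forall k, u k != [::]) (Hv : forall k, v k != [::]) P1 Q l P' :
  phase cI I_lists P1 Q -> step Delta P1 l P' -> answers P1 Q l P'.
Proof.
apply: (@answers_trace _ letters cI lamI (fun l => exists k, l = actN k) actS).
- by move=> c w; rewrite letters_cons [letters [:: c]]letters_cons cats0.
- by move=> l0 p Hr; inversion Hr; subst; [right|left; split=> //; exists k].
- by move=> l0 [k ->]; exact: r_I_k.
- exact: r_I_I.
- by move=> w l0 r0 Hw /(trans_plainP Hw) [w2 [H1 [H2 [H3 _]]]]; exists w2.
- move=> w a rho x; exact: plain_letter_move.
- by move=> P Q'; apply: bisim_I.
Qed.

Lemma answers_S P1 Q l P' : phase cS S_lists P1 Q -> step Delta P1 l P' -> answers P1 Q l P'.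
Proof.
apply: (@answers_trace _ indices cS lamS (fun l => exists a, l = actS a) actN).
- by move=> c w; rewrite indices_cons [indices [:: c]]indices_cons cats0.
- by move=> l0 p Hr; inversion Hr; subst; [right|left; split=> //; exists a].
- by move=> l0 [a ->]; exact: r_S_a.
- exact: r_S_S.
- by move=> w l0 r0 Hw /(trans_plainP Hw) [w2 [H1 [H2 [_ H3]]]]; exists w2.
- move=> w k kap x; exact: plain_index_move.
- by move=> P Q'; apply: bisim_S.
Qed.

Lemma bisim_answers (Hu : forall k, u k != [::]) (Hv : forall k, v k != [::]) k r :
  ucat (k :: r) = vcat (k :: r) ->
  forall P1 Q l P', bisim P1 Q -> step Delta P1 l P' -> answers P1 Q l P'.
Proof.
move=> Hsol P1 Q l P' [] {}P1 {}Q H Hs.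
- exact: answers_pcong H Hs.
- exact: answers_X Hsol H Hs.
- exact: answers_Y H Hs.
- exact: answers_D H Hs.
- exact: answers_C H Hs.
- exact: (answers_I Hu Hv H Hs).
- exact: answers_S H Hs.
- exact: answers_C' H Hs.
Qed.

End Algebra.

Theorem lemma6 (Sigma : finType) (n : nat) (u v : 'I_n -> seq Sigma) :
  1 < #|Sigma| ->
  (forall k, u k != [::]) -> (forall k, v k != [::]) ->
  PCP_solvable u v ->
  branching_bisimilar (G_rules u v) gtau (Cst cX) (Cst cY).
Proof.
(* The bound on the alphabet size only matters for the converse implication. *)
move=> _ u_nz v_nz [[|k r] [// _ sol]].
exists (bisim u v); split; last by apply: bisim_X; split; [|left]; exact: pc_refl.
apply: branching_bisimulation_of_answers; first exact: bisim_sym.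
exact: (@bisim_answers _ _ u v u_nz v_nz k r sol).
Qed.
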